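(* Let $\delta>0$ and $0<c\le2\sqrt\delta$, and set $\tilde\lambda:=1-\frac{c^2}{4\delta}\ge0$. Then $\tilde\lambda$ is an eigenvalue in the extended sense: the Riccati solution $\eta^u(z;\tilde\lambda)$ tending to $\mu^u_-(\tilde\lambda)$ as $z\to-\infty$ tends, as $z\to+\infty$, to the double root $\mu^s_+(\tilde\lambda)=\mu^u_+(\tilde\lambda)=-\frac{c}{2\delta}$. In particular, for $0<c<2\sqrt\delta$ the linearised operator about the travelling wave has the positive real eigenvalue $\tilde\lambda$.
   Context: $\hat u$ solves $\delta\hat u''+c\hat u'+\hat u(1-\hat u)=0$ with $\hat u(-\infty)=1$, $\hat u(+\infty)=0$. Riccati equation: $\eta'=\frac{\lambda-1+2\hat u(z)}{\delta}-\frac c\delta\eta-\eta^2$ on $\mathbb CP^1$ (equation for $\eta=q/p$ along solutions of $p'=q$, $q'=\frac{\lambda-1+2\hat u}{\delta}p-\frac c\delta q$). $\mu^{u}_-(\lambda)=\frac{-c+\sqrt{c^2+4\delta(\lambda+1)}}{2\delta}$, $\mu^{u,s}_+(\lambda)=\frac{-c\pm\sqrt{c^2+4\delta(\lambda-1)}}{2\delta}$. For $\mathrm{Re}\,\lambda\ge0$, $\lambda$ is an eigenvalue in the extended sense if some solution of the Riccati equation tends to $\mu^u_-(\lambda)$ as $z\to-\infty$ and to $\mu^s_+(\lambda)$ as $z\to+\infty$. *)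

From Stdlib Require Import Reals Lra.
Open Scope R_scope.

Definition lim_pinf (f : R -> R) (l : R) : Prop :=
  forall eps, eps > 0 -> exists M, forall z, z > M -> Rabs (f z - l) < eps.
Definition lim_minf (f : R -> R) (l : R) : Prop :=
  forall eps, eps > 0 -> exists M, forall z, z < M -> Rabs (f z - l) < eps.

Definition travelling_wave (delta c : R) (u : R -> R) : Prop :=
  exists du ddu : R -> R,
    (forall z, derivable_pt_lim u z (du z)) /\
    (forall z, derivable_pt_lim du z (ddu z)) /\
    (forall z, delta * ddu z + c * du z + u z * (1 - u z) = 0) /\
    lim_minf u 1 /\ lim_pinf u 0.

Definition mu_u_minus (delta c lam : R) : R :=
  (- c + sqrt (c ^ 2 + 4 * delta * (lam + 1))) / (2 * delta).
Definition mu_u_plus (delta c lam : R) : R :=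
  (- c + sqrt (c ^ 2 + 4 * delta * (lam - 1))) / (2 * delta).
Definition mu_s_plus (delta c lam : R) : R :=
  (- c - sqrt (c ^ 2 + 4 * delta * (lam - 1))) / (2 * delta).

(* Its projectivisation eta = q/p is a solution of the Riccati equation
   on CP^1 (here RP^1, since lam is real); every Riccati solution arises so. *)
Definition lin_solution (delta c lam : R) (u p q : R -> R) : Prop :=
  (forall z, derivable_pt_lim p z (q z)) /\
  (forall z, derivable_pt_lim q z ((lam - 1 + 2 * u z) / delta * p z - c / delta * q z)) /\
  (exists z0, ~ (p z0 = 0 /\ q z0 = 0)).

(* eta = q/p tends to l in P^1 as z -> +oo / -oo: eventually p <> 0 and q/p -> l. *)
Definition ratio_tends_pinf (p q : R -> R) (l : R) : Prop :=
  (exists M, forall z, z > M -> p z <> 0) /\ lim_pinf (fun z => q z / p z) l.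
Definition ratio_tends_minf (p q : R -> R) (l : R) : Prop :=
  (exists M, forall z, z < M -> p z <> 0) /\ lim_minf (fun z => q z / p z) l.

Definition extended_eigenvalue (delta c : R) (u : R -> R) (lam : R) : Prop :=
  exists p q, lin_solution delta c lam u p q /\
    ratio_tends_minf p q (mu_u_minus delta c lam) /\
    ratio_tends_pinf p q (mu_s_plus delta c lam).

From Stdlib Require Import Reals Lra Psatz ZArith Factorial.
From Coquelicot Require Import Coquelicot.
Open Scope R_scope.

(** Put [a = c / (2 delta)] and [lt = 1 - c^2 / (4 delta)], so that
    [c^2 + 4 delta (lt - 1) = 0]: the two spatial eigenvalues at [+oo]
    coincide at [- a].  The substitution [p = y e^(-a z)],
    [q = (y' - a y) e^(-a z)] turns the linearised system at [lt] into the
    Schroedinger-type equation [y'' = k y] with [k = 2 u / delta], and the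
    Riccati variable becomes [q / p = y' / y - a].  Hence:
    - at [-oo], [k -> s^2] with [s = sqrt (2 / delta)]; a cone-invariance
      argument for [y' - s y] plus a limiting procedure produce a solution
      with [y' / y -> s], i.e. [q / p -> s - a = mu^u_-(lt)];
    - at [+oo], [u] (hence [k]) decays exponentially by a Lyapunov argument,
      so every solution is asymptotically affine, [y = beta z + gam + o(1)],
      with [(beta, gam) <> 0] for nontrivial solutions; thus [y' / y -> 0]
      and [q / p -> - a = mu^s_+(lt)] for EVERY nontrivial solution. *)

Lemma derivable_pt_lim_eq (f : R -> R) x l l' :
  derivable_pt_lim f x l -> l = l' -> derivable_pt_lim f x l'.
Proof. intros H ->; exact H. Qed.

Lemma continuity_of_derivable (f : R -> R) x l :
  derivable_pt_lim f x l -> continuity_pt f x.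
Proof. intros H. apply derivable_continuous_pt. exists l. exact H. Qed.

Lemma derivable_pt_lim_exp_lin r x :
  derivable_pt_lim (fun t => exp (r * t)) x (r * exp (r * x)).
Proof.
  apply (derivable_pt_lim_eq _ _ (exp (r * x) * (r * 1))); [|ring].
  apply (derivable_pt_lim_comp (fun t => r * t) exp).
  - apply derivable_pt_lim_scal, derivable_pt_lim_id.
  - apply derivable_pt_lim_exp.
Qed.

Lemma derivable_pt_lim_mul_exp (f : R -> R) l r x :
  derivable_pt_lim f x l ->
  derivable_pt_lim (fun t => f t * exp (r * t)) x ((l + r * f x) * exp (r * x)).
Proof.
  intros H.
  apply (derivable_pt_lim_eq _ _ (l * exp (r * x) + f x * (r * exp (r * x)))); [|ring].
  apply (derivable_pt_lim_mult f (fun t => exp (r * t))); [exact H|].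
  apply derivable_pt_lim_exp_lin.
Qed.

Lemma derivable_pt_lim_lincomb (f g : R -> R) l m a b x :
  derivable_pt_lim f x l -> derivable_pt_lim g x m ->
  derivable_pt_lim (fun t => a * f t + b * g t) x (a * l + b * m).
Proof.
  intros Hf Hg.
  apply (derivable_pt_lim_plus (fun t => a * f t) (fun t => b * g t));
    apply derivable_pt_lim_scal; assumption.
Qed.

Lemma nondecreasing_of_deriv (f f' : R -> R) a b :
  (forall t, a <= t <= b -> derivable_pt_lim f t (f' t)) -> a <= b ->
  (forall t, a < t < b -> 0 <= f' t) -> f a <= f b.
Proof.
  intros Hd Hab Hp. destruct (Req_dec a b) as [->|Hne]; [lra|].
  destruct (MVT_cor2 f f' a b) as [c [Hc1 Hc2]]; [lra| intros; apply Hd; lra|].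
  assert (0 <= f' c * (b - a)) by (apply Rmult_le_pos; [apply Hp; lra| lra]). lra.
Qed.

Lemma nonincreasing_of_deriv (f f' : R -> R) a b :
  (forall t, a <= t <= b -> derivable_pt_lim f t (f' t)) -> a <= b ->
  (forall t, a < t < b -> f' t <= 0) -> f b <= f a.
Proof.
  intros Hd Hab Hp. assert (- f a <= - f b); [|lra].
  apply (nondecreasing_of_deriv (fun t => - f t) (fun t => - f' t)); auto.
  - intros t Ht. apply derivable_pt_lim_opp, Hd; lra.
  - intros t Ht. specialize (Hp t Ht). lra.
Qed.

Lemma abs_increment_le (f f' g g' : R -> R) a b :
  (forall t, a <= t <= b -> derivable_pt_lim f t (f' t)) ->
  (forall t, a <= t <= b -> derivable_pt_lim g t (g' t)) -> a <= b ->
  (forall t, a < t < b -> Rabs (f' t) <= g' t) ->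
  Rabs (f b - f a) <= g b - g a.
Proof.
  intros Hf Hg Hab Hb.
  assert (g a - f a <= g b - f b).
  { apply (nondecreasing_of_deriv (fun t => g t - f t) (fun t => g' t - f' t)); auto.
    - intros t Ht. apply derivable_pt_lim_minus; auto.
    - intros t Ht. pose proof (Rle_abs (f' t)). specialize (Hb t Ht). lra. }
  assert (g a + f a <= g b + f b).
  { apply (nondecreasing_of_deriv (fun t => g t + f t) (fun t => g' t + f' t)); auto.
    - intros t Ht. apply derivable_pt_lim_plus; auto.
    - intros t Ht. pose proof (Rle_abs (- f' t)). rewrite Rabs_Ropp in *. specialize (Hb t Ht). lra. }
  apply Rabs_le. lra.
Qed.

Lemma const_of_deriv_zero (f : R -> R) :
  (forall t, derivable_pt_lim f t 0) -> forall x z, f x = f z.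
Proof.
  intros Hd.
  assert (H : forall x z, x <= z -> f x = f z).
  { intros x z Hxz. apply Rle_antisym.
    - apply (nondecreasing_of_deriv f (fun _ => 0)); auto; intros; lra.
    - apply (nonincreasing_of_deriv f (fun _ => 0)); auto; intros; lra. }
  intros x z. destruct (Rle_or_lt x z); [apply H; auto| symmetry; apply H; lra].
Qed.

Lemma continuity_induction (f : R -> R) a b :
  a <= b -> (forall t, continuity_pt f t) ->
  (forall z, a <= z <= b -> (forall t, a <= t < z -> 0 < f t) -> 0 < f z) ->
  forall z, a <= z <= b -> 0 < f z.
Proof.
  intros Hab Hc Hind.
  set (E := fun x => a <= x <= b /\ forall t, a <= t <= x -> 0 < f t).
  assert (HEa : E a).
  { split; [lra|]. intros t Ht. replace t with a by lra. apply Hind; [lra|]. intros; lra. }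
  assert (Hb : bound E) by (exists b; intros x [Hx _]; lra).
  destruct (completeness E Hb (ex_intro _ a HEa)) as [m [Hub Hlub]].
  assert (Ham : a <= m) by (apply Hub; exact HEa).
  assert (Hmb : m <= b) by (apply Hlub; intros x [Hx _]; lra).
  assert (Hbelow : forall t, a <= t < m -> 0 < f t).
  { intros t Ht.
    destruct (Classical_Prop.classic (exists x, E x /\ t < x)) as [[x [[_ Hx] Htx]]|Hn].
    - apply Hx. lra.
    - exfalso. assert (m <= t); [|lra]. apply Hlub. intros x Hx.
      destruct (Rle_or_lt x t); auto. exfalso; apply Hn; exists x; auto. }
  assert (Hm : 0 < f m) by (apply Hind; auto).
  assert (Hmb' : m = b).
  { destruct (Req_dec m b) as [|Hne]; auto. exfalso.
    destruct (Hc m (f m / 2)) as [d [Hd Hd2]]; [lra|].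
    set (x := Rmin b (m + d / 2)).
    assert (Hx : E x).
    { split; [unfold x; split; [apply Rmin_glb; lra| apply Rmin_l]|].
      intros t Ht. destruct (Rlt_or_le t m) as [Htm|Htm]; [apply Hbelow; lra|].
      destruct (Req_dec t m) as [->|Htm']; auto.
      assert (x <= m + d / 2) by apply Rmin_r.
      assert (Hdist : Rabs (f t - f m) < f m / 2).
      { apply (Hd2 t). split; [split; [exact I| congruence]|].
        simpl. unfold Rdist. rewrite Rabs_right; lra. }
      apply Rabs_def2 in Hdist. lra. }
    assert (x <= m) by (apply Hub; exact Hx).
    unfold x, Rmin in H. destruct (Rle_dec b (m + d / 2)); lra. }
  subst m. intros z Hz. destruct (Req_dec z b) as [->|]; auto. apply Hbelow; lra.
Qed.

Lemma lim_ge (u : nat -> R) l m N :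
  Un_cv u l -> (forall n, (N <= n)%nat -> m <= u n) -> m <= l.
Proof.
  intros H Hm. destruct (Rle_or_lt m l) as [|Hlt]; auto. exfalso.
  destruct (H (m - l)) as [N1 HN1]; [lra|].
  specialize (HN1 (N + N1)%nat ltac:(lia)). specialize (Hm (N + N1)%nat ltac:(lia)).
  unfold Rdist in HN1. apply Rabs_def2 in HN1. lra.
Qed.

Lemma lim_le (u : nat -> R) l m N :
  Un_cv u l -> (forall n, (N <= n)%nat -> u n <= m) -> l <= m.
Proof.
  intros H Hm. assert (- m <= - l); [|lra].
  apply (lim_ge (fun n => - u n) (- l) (- m) N); [apply CV_opp; exact H|].
  intros n Hn. specialize (Hm n Hn). lra.
Qed.

Lemma cv_const (c : R) : Un_cv (fun _ => c) c.
Proof. intros e He. exists O. intros. unfold Rdist. rewrite Rminus_eq_0, Rabs_R0. lra. Qed.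

Lemma cv_of_tail (u tau : nat -> R) :
  Un_cv tau 0 -> (forall m n, (n <= m)%nat -> Rabs (u m - u n) <= tau n) ->
  exists l, Un_cv u l /\ forall n, Rabs (l - u n) <= tau n.
Proof.
  intros Ht Hb.
  assert (Hc : Cauchy_crit u).
  { intros eps Heps. destruct (Ht (eps / 2)) as [N HN]; [lra|].
    exists N. intros n m Hn Hm. unfold Rdist in *.
    specialize (HN N (le_n N)). rewrite Rminus_0_r in HN. pose proof (Rle_abs (tau N)).
    pose proof (Hb n N Hn). pose proof (Hb m N Hm).
    replace (u n - u m) with ((u n - u N) - (u m - u N)) by ring.
    eapply Rle_lt_trans; [apply Rabs_triang|]. rewrite Rabs_Ropp. lra. }
  destruct (Rcomplete.R_complete u Hc) as [l Hl]. exists l. split; auto.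
  intros n.
  apply (lim_le (fun m => Rabs (u (m + n)%nat - u n)) _ _ O).
  - apply (continuity_seq Rabs); [apply Rcontinuity_abs|].
    apply CV_minus; [|apply cv_const].
    intros e He. destruct (Hl e He) as [N HN]. exists N. intros m Hm. apply HN. lia.
  - intros m _. apply Hb. lia.
Qed.

Lemma nat_ge x : exists n : nat, x <= INR n.
Proof.
  destruct (archimed x) as [H1 _]. destruct (Z_lt_le_dec (up x) 0) as [Hl|Hl].
  - exists O. simpl. apply IZR_lt in Hl. lra.
  - exists (Z.to_nat (up x)). rewrite INR_IZR_INZ, Z2Nat.id by lia. lra.
Qed.

Lemma affine_le_exp k : 0 < k -> forall z, 0 <= z -> 1 + z <= (1 + 1 / k) * exp (k * z).
Proof.
  intros Hk z Hz. pose proof (exp_ineq1_le (k * z)).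
  assert (0 <= 1 / k) by (unfold Rdiv; rewrite Rmult_1_l; left; apply Rinv_0_lt_compat; auto).
  assert ((1 + 1 / k) * (1 + k * z) <= (1 + 1 / k) * exp (k * z)) by (apply Rmult_le_compat_l; lra).
  assert ((1 + 1 / k) * (1 + k * z) = 1 + z + 1 / k + k * z) by (field; lra).
  nra.
Qed.

Lemma exp_decay_small rho eps : 0 < rho -> 0 < eps ->
  exists Z, forall z, Z <= z -> exp (- rho * z) < eps.
Proof.
  intros Hr He. exists ((Rabs (ln eps) + 1) / rho). intros z Hz.
  rewrite <- (exp_ln eps He). apply exp_increasing.
  assert (rho * ((Rabs (ln eps) + 1) / rho) <= rho * z) by (apply Rmult_le_compat_l; lra).
  replace (rho * ((Rabs (ln eps) + 1) / rho)) with (Rabs (ln eps) + 1) in H by (field; lra).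
  pose proof (Rle_abs (- ln eps)). rewrite Rabs_Ropp in H0. lra.
Qed.

Lemma exp_decay_le1 r z : 0 <= r -> 0 <= z -> exp (- r * z) <= 1.
Proof.
  intros Hr Hz. rewrite <- exp_0. destruct (Req_dec (r * z) 0) as [H|H].
  - replace (- r * z) with 0 by lra. lra.
  - left. apply exp_increasing. nra.
Qed.

Lemma exp_opp_mul r z : exp (- r * z) * exp (r * z) = 1.
Proof. rewrite <- exp_plus, <- exp_0. f_equal. ring. Qed.

(** * Existence of solutions of [y'' = k y] (Picard iteration) *)

Lemma cv_shift (u : nat -> R) l : Un_cv u l -> Un_cv (fun n => u (S n)) l.
Proof. intros H e He. destruct (H e He) as [N HN]. exists N. intros n Hn. apply HN. lia. Qed.

Lemma derivable_RInt (f : R -> R) x :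
  (forall t, continuity_pt f t) -> derivable_pt_lim (fun z => RInt f 0 z) x (f x).
Proof.
  intros Hf. apply is_derive_Reals.
  apply (is_derive_RInt f (fun z => RInt f 0 z) 0 x).
  - apply filter_forall. intros z. apply (@RInt_correct R_CompleteNormedModule).
    apply ex_RInt_continuous. intros t _. apply continuity_pt_filterlim, Hf.
  - apply continuity_pt_filterlim, Hf.
Qed.

Lemma power_bound_nonneg (d d' : R -> R) M L n :
  (forall t, derivable_pt_lim d t (d' t)) -> d 0 = 0 ->
  (forall t, 0 <= t <= L -> Rabs (d' t) <= M * t ^ n / INR (fact n)) ->
  forall x, 0 <= x <= L -> Rabs (d x) <= M * x ^ S n / INR (fact (S n)).
Proof.
  intros Hd H0 Hb x Hx.
  assert (Hf : 0 < INR (fact n)) by (apply lt_0_INR, lt_O_fact).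
  set (G := fun t => M * t ^ S n / INR (fact (S n))).
  assert (HG : forall t, derivable_pt_lim G t (M * t ^ n / INR (fact n))).
  { intros t. unfold G.
    apply (derivable_pt_lim_eq _ _ (M * (INR (S n) * t ^ Init.Nat.pred (S n)) / INR (fact (S n)))).
    - apply (derivable_pt_lim_div_scal (fun t => M * t ^ S n)).
      apply derivable_pt_lim_scal, derivable_pt_lim_pow.
    - simpl Init.Nat.pred. rewrite fact_simpl, mult_INR. field. split; [lra|].
      apply not_0_INR. lia. }
  assert (HG0 : G 0 = 0) by (unfold G; rewrite pow_i by lia; unfold Rdiv; ring).
  pose proof (abs_increment_le d d' G _ 0 x (fun t _ => Hd t) (fun t _ => HG t)) as Hcmp.
  rewrite H0, HG0, !Rminus_0_r in Hcmp. apply Hcmp; [lra|].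
  intros t Ht. apply Hb. lra.
Qed.

Lemma power_bound (d d' : R -> R) M L n :
  (forall t, derivable_pt_lim d t (d' t)) -> d 0 = 0 ->
  (forall t, Rabs t <= L -> Rabs (d' t) <= M * Rabs t ^ n / INR (fact n)) ->
  forall x, Rabs x <= L -> Rabs (d x) <= M * Rabs x ^ S n / INR (fact (S n)).
Proof.
  intros Hd H0 Hb x Hx. destruct (Rle_or_lt 0 x) as [Hx0|Hx0].
  - rewrite (Rabs_right x) in * by lra.
    apply (power_bound_nonneg d d' M L); auto.
    intros t Ht. rewrite <- (Rabs_right t) at 2 by lra. apply Hb. rewrite Rabs_right; lra.
  - rewrite (Rabs_left x) in * by lra. replace (d x) with (d (- - x)) by (f_equal; ring).
    apply (power_bound_nonneg (fun t => d (- t)) (fun t => - d' (- t)) M L); [| rewrite Ropp_0; auto| | lra].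
    + intros t. apply (derivable_pt_lim_eq _ _ (d' (- t) * (- 1))); [|ring].
      apply (derivable_pt_lim_comp (fun t => - t) d); [|apply Hd].
      apply (derivable_pt_lim_eq _ _ (- 1)); [apply derivable_pt_lim_opp, derivable_pt_lim_id| ring].
    + intros t Ht. rewrite Rabs_Ropp. rewrite <- (Rabs_right t) at 2 by lra.
      rewrite <- (Rabs_Ropp t). apply Hb. rewrite Rabs_Ropp, Rabs_right; lra.
Qed.

Lemma continuous_bounded (k : R -> R) L : (forall t, continuity_pt k t) ->
  exists K, 0 <= K /\ forall t, Rabs t <= L -> Rabs (k t) <= K.
Proof.
  intros Hk. destruct (Rle_or_lt 0 L) as [HL|HL].
  - destruct (continuity_ab_maj (fun t => Rabs (k t)) (- L) L) as [m [Hm1 _]]; [lra| |].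
    + intros c _. apply (continuity_pt_comp k Rabs); auto. apply Rcontinuity_abs.
    + exists (Rabs (k m)). split; [apply Rabs_pos|]. intros t Ht. apply Hm1.
      apply Rabs_le_between. exact Ht.
  - exists 0. split; [lra|]. intros t Ht. pose proof (Rabs_pos t). lra.
Qed.

(** The pointwise limit of a sequence of functions (arbitrary where it diverges). *)
Definition limf (u : nat -> R -> R) (x : R) : R := real (Lim_seq (fun n => u n x)).

Lemma limf_spec (u : nat -> R -> R) x l : Un_cv (fun n => u n x) l -> limf u x = l.
Proof.
  intros H. unfold limf. rewrite (is_lim_seq_unique _ l); [reflexivity|].
  apply is_lim_seq_Reals. exact H.
Qed.

Fixpoint picard (k : R -> R) (a b : R) (n : nat) : (R -> R) * (R -> R) :=
  match n with
  | O => (fun _ => a, fun _ => b)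
  | S n => (fun x => a + RInt (snd (picard k a b n)) 0 x,
            fun x => b + RInt (fun t => k t * fst (picard k a b n) t) 0 x)
  end.

Section Picard.
Variables (k : R -> R) (a b : R).
Hypothesis Hk : forall t, continuity_pt k t.

Let Y n := fst (picard k a b n).
Let V n := snd (picard k a b n).

Lemma picard_spec n :
  (forall x, continuity_pt (Y n) x /\ continuity_pt (V n) x) /\
  (forall x, derivable_pt_lim (Y (S n)) x (V n x) /\
             derivable_pt_lim (V (S n)) x (k x * Y n x)) /\
  Y n 0 = a /\ V n 0 = b.
Proof.
  assert (Hder : forall n, (forall x, continuity_pt (Y n) x /\ continuity_pt (V n) x) ->
    forall x, derivable_pt_lim (Y (S n)) x (V n x) /\
              derivable_pt_lim (V (S n)) x (k x * Y n x)).
  { intros m Hc x. split.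
    - apply (derivable_pt_lim_eq _ _ (0 + V m x)); [|ring].
      apply (derivable_pt_lim_plus (fun _ => a) (fun x => RInt (V m) 0 x)).
      + apply derivable_pt_lim_const.
      + apply derivable_RInt. intros t. apply Hc.
    - apply (derivable_pt_lim_eq _ _ (0 + k x * Y m x)); [|ring].
      apply (derivable_pt_lim_plus (fun _ => b) (fun x => RInt (fun t => k t * Y m t) 0 x)).
      + apply derivable_pt_lim_const.
      + apply (derivable_RInt (fun t => k t * Y m t)). intros t.
        apply continuity_pt_mult; auto. apply Hc. }
  induction n as [|n IH].
  - assert (Hc0 : forall x, continuity_pt (Y 0) x /\ continuity_pt (V 0) x).
    { intros x. split; apply continuity_pt_const; intros ? ?; reflexivity. }
    split; [exact Hc0|]. split; [apply Hder, Hc0|]. simpl. auto.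
  - destruct IH as [_ [Hd _]].
    assert (Hc1 : forall x, continuity_pt (Y (S n)) x /\ continuity_pt (V (S n)) x).
    { intros x. split; eapply continuity_of_derivable; apply Hd. }
    split; [exact Hc1|]. split; [apply Hder, Hc1|].
    unfold Y, V; simpl. rewrite !(@RInt_point R_CompleteNormedModule). split; apply Rplus_0_r.
Qed.

Section PicardBounds.
Variables (L C K : R).
Hypotheses (HL : 0 <= L) (HK : 1 <= K) (HC : 0 <= C) (Hb : Rabs b <= C) (Ha : K * Rabs a <= C)
  (HkK : forall t, Rabs t <= L -> Rabs (k t) <= K).

Let bound n x := C / K * K ^ S n * Rabs x ^ S n / INR (fact (S n)).

Lemma bound_nonneg n x : 0 <= bound n x.
Proof.
  unfold bound, Rdiv. pose proof (lt_0_INR _ (lt_O_fact (S n))).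
  apply Rmult_le_pos; [|left; apply Rinv_0_lt_compat; auto].
  apply Rmult_le_pos; [|apply pow_le, Rabs_pos]. apply Rmult_le_pos; [|apply pow_le; lra].
  apply Rmult_le_pos; [auto| left; apply Rinv_0_lt_compat; lra].
Qed.

Lemma picard_first_difference x : Rabs x <= L ->
  Rabs (Y 1 x - Y 0 x) <= bound 0 x /\ Rabs (V 1 x - V 0 x) <= bound 0 x.
Proof.
  intros Hx. destruct (picard_spec 0) as [_ [Hd0 [H0a H0b]]]. destruct (picard_spec 1) as [_ [_ [H1a H1b]]].
  replace (bound 0 x) with (C * Rabs x ^ 1 / INR (fact 1)) by (unfold bound; simpl; field; lra).
  split.
  - apply (power_bound (fun t => Y 1 t - Y 0 t) (fun t => b - 0) C L 0); auto.
    + intros t. apply derivable_pt_lim_minus; [apply Hd0| apply derivable_pt_lim_const].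
    + rewrite H1a, H0a. ring.
    + intros t Ht. simpl. rewrite Rminus_0_r. lra.
  - apply (power_bound (fun t => V 1 t - V 0 t) (fun t => k t * a - 0) C L 0); auto.
    + intros t. apply derivable_pt_lim_minus; [apply Hd0| apply derivable_pt_lim_const].
    + rewrite H1b, H0b. ring.
    + intros t Ht. simpl. rewrite Rminus_0_r, Rabs_mult.
      assert (Rabs (k t) * Rabs a <= K * Rabs a) by (apply Rmult_le_compat_r; [apply Rabs_pos| auto]).
      lra.
Qed.

Lemma picard_next_difference n :
  (forall x, Rabs x <= L -> Rabs (Y (S n) x - Y n x) <= bound n x /\ Rabs (V (S n) x - V n x) <= bound n x) ->
  forall x, Rabs x <= L ->
    Rabs (Y (S (S n)) x - Y (S n) x) <= bound (S n) x /\ Rabs (V (S (S n)) x - V (S n) x) <= bound (S n) x.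
Proof.
  intros IH x Hx.
  destruct (picard_spec (S n)) as [_ [Hd1 [H1a H1b]]]. destruct (picard_spec n) as [_ [Hd0 _]].
  destruct (picard_spec (S (S n))) as [_ [_ [H2a H2b]]].
  assert (Hf : 0 < INR (fact (S n))) by (apply lt_0_INR, lt_O_fact).
  assert (HBK : forall t, C / K * K ^ S (S n) * Rabs t ^ S n / INR (fact (S n)) = K * bound n t).
  { intros t. unfold bound. change (K ^ S (S n)) with (K * K ^ S n). field. lra. }
  split.
  - apply (power_bound (fun t => Y (S (S n)) t - Y (S n) t) (fun t => V (S n) t - V n t)
             (C / K * K ^ S (S n)) L (S n)); auto.
    + intros t. apply derivable_pt_lim_minus; [apply Hd1| apply Hd0].
    + rewrite H2a, H1a. ring.
    + intros t Ht. destruct (IH t Ht) as [_ Hv]. rewrite HBK. pose proof (bound_nonneg n t). nra.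
  - apply (power_bound (fun t => V (S (S n)) t - V (S n) t) (fun t => k t * Y (S n) t - k t * Y n t)
             (C / K * K ^ S (S n)) L (S n)); auto.
    + intros t. apply derivable_pt_lim_minus; [apply Hd1| apply Hd0].
    + rewrite H2b, H1b. ring.
    + intros t Ht. destruct (IH t Ht) as [Hy _]. rewrite HBK.
      replace (k t * Y (S n) t - k t * Y n t) with (k t * (Y (S n) t - Y n t)) by ring.
      rewrite Rabs_mult. apply Rmult_le_compat; auto using Rabs_pos.
Qed.

Lemma picard_difference n x : Rabs x <= L ->
  Rabs (Y (S n) x - Y n x) <= bound n x /\ Rabs (V (S n) x - V n x) <= bound n x.
Proof.
  revert x. induction n as [|n IH]; [apply picard_first_difference| apply picard_next_difference, IH].
Qed.

(** Tails of the exponential series of [K L] bound the Cauchy differences. *)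
Let tail n := C / K * (exp (K * L) - E1 (K * L) n).

Lemma picard_tail_null : Un_cv tail 0.
Proof.
  replace 0 with (C / K * (exp (K * L) - exp (K * L))) by ring.
  apply CV_mult; [apply cv_const|]. apply CV_minus; [apply cv_const| apply E1_cvg].
Qed.

Lemma picard_tail m n x : (n <= m)%nat -> Rabs x <= L ->
  Rabs (Y m x - Y n x) <= tail n /\ Rabs (V m x - V n x) <= tail n.
Proof.
  intros Hnm Hx. set (X := K * L). assert (HX : 0 <= X) by (unfold X; nra).
  assert (Hstep : forall j, bound j x <= C / K * (/ INR (fact (S j)) * X ^ S j)).
  { intros j. assert (Hf : 0 < INR (fact (S j))) by (apply lt_0_INR, lt_O_fact).
    unfold bound, X. rewrite Rpow_mult_distr.
    replace (C / K * (/ INR (fact (S j)) * (K ^ S j * L ^ S j))) with (C / K * K ^ S j * L ^ S j / INR (fact (S j)))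
      by (field; lra).
    unfold Rdiv. apply Rmult_le_compat_r; [left; apply Rinv_0_lt_compat; auto|].
    apply Rmult_le_compat_l; [apply Rmult_le_pos; [apply Rmult_le_pos; [auto| left; apply Rinv_0_lt_compat; lra]| apply pow_le; lra]|].
    apply pow_incr. split; [apply Rabs_pos| auto]. }
  assert (Htr : forall u v w : R, Rabs (u - w) <= Rabs (u - v) + Rabs (v - w)).
  { intros u v w. replace (u - w) with ((u - v) + (v - w)) by ring. apply Rabs_triang. }
  assert (Hsum : forall p, Rabs (Y (n + p)%nat x - Y n x) <= C / K * (E1 X (n + p) - E1 X n) /\
                           Rabs (V (n + p)%nat x - V n x) <= C / K * (E1 X (n + p) - E1 X n)).
  { induction p as [|p [IH1 IH2]]; [rewrite Nat.add_0_r, !Rminus_eq_0, Rabs_R0; lra|].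
    rewrite Nat.add_succ_r. destruct (picard_difference (n + p)%nat x Hx) as [S1 S2].
    pose proof (Hstep (n + p)%nat).
    change (E1 X (S (n + p))) with (E1 X (n + p) + / INR (fact (S (n + p))) * X ^ S (n + p)).
    split.
    - eapply Rle_trans; [apply (Htr _ (Y (n + p)%nat x))|]. lra.
    - eapply Rle_trans; [apply (Htr _ (V (n + p)%nat x))|]. lra. }
  replace m with (n + (m - n))%nat by lia. destruct (Hsum (m - n)%nat) as [H1 H2].
  assert (E1 X (n + (m - n)) <= exp X).
  { apply sum_incr; [apply E1_cvg|]. intros j.
    apply Rmult_le_pos; [left; apply Rinv_0_lt_compat, lt_0_INR, lt_O_fact| apply pow_le; auto]. }
  assert (C / K * (E1 X (n + (m - n)) - E1 X n) <= C / K * (exp X - E1 X n))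
    by (apply Rmult_le_compat_l; [apply Rmult_le_pos; [auto| left; apply Rinv_0_lt_compat; lra]| lra]).
  unfold tail. fold X. split; lra.
Qed.
End PicardBounds.

Lemma picard_uniform L : 0 <= L ->
  exists tau, Un_cv tau 0 /\ forall n x, Rabs x <= L ->
    Rabs (Y n x - limf Y x) <= tau n /\ Rabs (V n x - limf V x) <= tau n.
Proof.
  intros HL. destruct (continuous_bounded k L Hk) as [K0 [HK0 HkK0]].
  set (K := Rmax 1 K0). set (C := Rmax (Rabs b) (K * Rabs a)).
  assert (HK : 1 <= K) by apply Rmax_l.
  assert (HkK : forall t, Rabs t <= L -> Rabs (k t) <= K)
    by (intros t Ht; specialize (HkK0 t Ht); pose proof (Rmax_r 1 K0); unfold K; lra).
  assert (Hb : Rabs b <= C) by apply Rmax_l. assert (Ha : K * Rabs a <= C) by apply Rmax_r.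
  assert (HC : 0 <= C) by (pose proof (Rabs_pos b); lra).
  eexists. split; [apply (picard_tail_null L C K)|]. intros n x Hx.
  pose proof (picard_tail L C K HL HK HC Hb Ha HkK) as Hb'.
  destruct (cv_of_tail (fun n => Y n x) _ (picard_tail_null L C K)) as [l1 [Hl1 Ht1]];
    [intros; apply Hb'; auto|].
  destruct (cv_of_tail (fun n => V n x) _ (picard_tail_null L C K)) as [l2 [Hl2 Ht2]];
    [intros; apply Hb'; auto|].
  rewrite (limf_spec _ x l1 Hl1), (limf_spec _ x l2 Hl2).
  rewrite <- (Rabs_Ropp (Y n x - l1)), <- (Rabs_Ropp (V n x - l2)), !Ropp_minus_distr. auto.
Qed.
End Picard.

Lemma CVU_of_bound (fn : nat -> R -> R) (f : R -> R) (tau : nat -> R) (L : posreal) :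
  Un_cv tau 0 -> (forall n t, Rabs t <= L -> Rabs (fn n t - f t) <= tau n) -> CVU fn f 0 L.
Proof.
  intros Ht Hb eps Heps. destruct (Ht eps Heps) as [N HN]. exists N. intros n y Hn Hy.
  specialize (HN n Hn). unfold Rdist in HN. rewrite Rminus_0_r in HN.
  unfold Boule in Hy. rewrite Rminus_0_r in Hy.
  pose proof (Hb n y ltac:(lra)). rewrite <- Rabs_Ropp, Ropp_minus_distr.
  pose proof (Rle_abs (tau n)). lra.
Qed.

(** Existence for the Cauchy problem [y' = v, v' = k y, y 0 = a, v 0 = b]:
    the limits of the Picard iterates are differentiable, since the
    derivatives of the iterates converge uniformly on compacts. *)
Lemma linear_ode_exists (k : R -> R) a b : (forall t, continuity_pt k t) ->
  exists y v : R -> R, (forall x, derivable_pt_lim y x (v x)) /\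
    (forall x, derivable_pt_lim v x (k x * y x)) /\ y 0 = a /\ v 0 = b.
Proof.
  intros Hk.
  set (Yn := fun n => fst (picard k a b n)). set (Vn := fun n => snd (picard k a b n)).
  set (y := limf Yn). set (v := limf Vn).
  assert (Hunif : forall L, 0 <= L -> exists tau, Un_cv tau 0 /\ forall n x, Rabs x <= L ->
            Rabs (Yn n x - y x) <= tau n /\ Rabs (Vn n x - v x) <= tau n)
    by exact (picard_uniform k a b Hk).
  assert (Hcv : forall x, Un_cv (fun n => Yn n x) (y x) /\ Un_cv (fun n => Vn n x) (v x)).
  { intros x. destruct (Hunif (Rabs x) (Rabs_pos x)) as [tau [Ht Hb]].
    split; intros e He; destruct (Ht e He) as [N HN]; exists N; intros n Hn;
      specialize (HN n Hn); unfold Rdist in *; rewrite Rminus_0_r in HN;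
      destruct (Hb n x (Rle_refl _)) as [H1 H2]; pose proof (Rle_abs (tau n)); lra. }
  assert (Hder : forall x, derivable_pt_lim y x (v x) /\ derivable_pt_lim v x (k x * y x)).
  { intros x. assert (HL : 0 < Rabs x + 1) by (pose proof (Rabs_pos x); lra).
    set (L := mkposreal _ HL).
    assert (Hx : Boule 0 L x) by (unfold Boule; simpl; rewrite Rminus_0_r; lra).
    destruct (Hunif L ltac:(simpl; lra)) as [tau [Ht Hb]].
    destruct (continuous_bounded k L Hk) as [K [HK HkK]].
    split.
    - apply (CVU_derivable (fun n => Yn (S n)) Vn y v 0 L); auto.
      + apply (CVU_of_bound _ _ tau); auto. intros n t Ht'. apply Hb; auto.
      + intros t _. apply (cv_shift (fun n => Yn n t)), Hcv.
      + intros n t _. apply (picard_spec k a b Hk n).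
    - apply (CVU_derivable (fun n => Vn (S n)) (fun n t => k t * Yn n t) v (fun t => k t * y t) 0 L); auto.
      + apply (CVU_of_bound _ _ (fun n => K * tau n)).
        * replace 0 with (K * 0) by ring. apply CV_mult; [apply cv_const| exact Ht].
        * intros n t Ht'. destruct (Hb n t Ht') as [H1 _].
          replace (k t * Yn n t - k t * y t) with (k t * (Yn n t - y t)) by ring.
          rewrite Rabs_mult. apply Rmult_le_compat; auto using Rabs_pos.
      + intros t _. apply (cv_shift (fun n => Vn n t)), Hcv.
      + intros n t _. apply (picard_spec k a b Hk n). }
  assert (Hinit : forall n, Yn n 0 = a /\ Vn n 0 = b) by (intros n; apply (picard_spec k a b Hk n)).
  exists y, v. split; [intros x; apply Hder|]. split; [intros x; apply Hder|]. split.
  - apply (UL_sequence (fun n => Yn n 0)); [apply Hcv|].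
    apply (Un_cv_ext (fun _ => a)); [intros n; symmetry; apply Hinit| apply cv_const].
  - apply (UL_sequence (fun n => Vn n 0)); [apply Hcv|].
    apply (Un_cv_ext (fun _ => b)); [intros n; symmetry; apply Hinit| apply cv_const].
Qed.

(** * The solution space of [y'' = k y] *)

Definition solves (k y v : R -> R) : Prop :=
  (forall x, derivable_pt_lim y x (v x)) /\ (forall x, derivable_pt_lim v x (k x * y x)).

Definition wronskian (y v y' v' : R -> R) (x : R) : R := y x * v' x - v x * y' x.

Lemma wronskian_const k y v y' v' : solves k y v -> solves k y' v' ->
  forall x z, wronskian y v y' v' x = wronskian y v y' v' z.
Proof.
  intros [H1 H2] [H3 H4]. unfold wronskian.
  apply (const_of_deriv_zero (fun x => y x * v' x - v x * y' x)). intros t.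
  apply (derivable_pt_lim_eq _ _ ((v t * v' t + y t * (k t * y' t)) - (k t * y t * y' t + v t * v' t)));
    [|ring].
  apply derivable_pt_lim_minus; apply derivable_pt_lim_mult; auto.
Qed.

Lemma solves_lincomb k y v y' v' al be : solves k y v -> solves k y' v' ->
  solves k (fun x => al * y x + be * y' x) (fun x => al * v x + be * v' x).
Proof.
  intros [H1 H2] [H3 H4]. split; intros x.
  - apply derivable_pt_lim_lincomb; auto.
  - apply (derivable_pt_lim_eq _ _ (al * (k x * y x) + be * (k x * y' x)));
      [apply derivable_pt_lim_lincomb; auto| ring].
Qed.

Lemma solves_add_scaled k y v y' v' c : solves k y v -> solves k y' v' ->
  solves k (fun x => y x + c * y' x) (fun x => v x + c * v' x).
Proof.
  intros S S'. destruct (solves_lincomb k y v y' v' 1 c S S') as [H1 H2].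
  split; intros x.
  - apply (derivable_pt_lim_ext (fun x => 1 * y x + c * y' x)); [intros; ring|].
    eapply derivable_pt_lim_eq; [apply H1| ring].
  - apply (derivable_pt_lim_ext (fun x => 1 * v x + c * v' x)); [intros; ring|].
    eapply derivable_pt_lim_eq; [apply H2| ring].
Qed.

Lemma fundamental_system (k : R -> R) : (forall t, continuity_pt k t) ->
  exists y1 v1 y2 v2, solves k y1 v1 /\ solves k y2 v2 /\
    forall x, wronskian y1 v1 y2 v2 x = 1.
Proof.
  intros Hk. destruct (linear_ode_exists k 1 0 Hk) as [y1 [v1 [H1 [H2 [H3 H4]]]]].
  destruct (linear_ode_exists k 0 1 Hk) as [y2 [v2 [H5 [H6 [H7 H8]]]]].
  assert (S1 : solves k y1 v1) by (split; auto). assert (S2 : solves k y2 v2) by (split; auto).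
  exists y1, v1, y2, v2. split; [exact S1|]. split; [exact S2|].
  intros x. rewrite (wronskian_const k y1 v1 y2 v2 S1 S2 x 0).
  unfold wronskian. rewrite H3, H4, H7, H8. ring.
Qed.

Section FundamentalSystem.
Variables (k y1 v1 y2 v2 : R -> R).
Hypotheses (S1 : solves k y1 v1) (S2 : solves k y2 v2)
  (HW : forall x, wronskian y1 v1 y2 v2 x = 1).

Lemma zero_of_wronskians y v :
  (forall x, wronskian y v y1 v1 x = 0) -> (forall x, wronskian y v y2 v2 x = 0) ->
  forall x, y x = 0 /\ v x = 0.
Proof.
  intros E1 E2 x. specialize (E1 x). specialize (E2 x). specialize (HW x).
  unfold wronskian in *. split.
  - transitivity (y x * (y1 x * v2 x - v1 x * y2 x)); [rewrite HW; ring|].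
    transitivity (y1 x * (y x * v2 x - v x * y2 x) - y2 x * (y x * v1 x - v x * y1 x)); [ring|].
    rewrite E1, E2. ring.
  - transitivity (v x * (y1 x * v2 x - v1 x * y2 x)); [rewrite HW; ring|].
    transitivity (v1 x * (y x * v2 x - v x * y2 x) - v2 x * (y x * v1 x - v x * y1 x)); [ring|].
    rewrite E1, E2. ring.
Qed.

Lemma solves_unique y v y' v' : solves k y v -> solves k y' v' ->
  forall z0, y z0 = y' z0 -> v z0 = v' z0 -> forall x, y x = y' x /\ v x = v' x.
Proof.
  intros S S' z0 Hy Hv x.
  set (d := fun x => 1 * y x + (-1) * y' x). set (e := fun x => 1 * v x + (-1) * v' x).
  assert (Sd : solves k d e) by (apply solves_lincomb; auto).
  assert (Hz : forall yi vi, solves k yi vi -> forall x, wronskian d e yi vi x = 0).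
  { intros yi vi Si t. rewrite (wronskian_const k d e yi vi Sd Si t z0).
    unfold wronskian, d, e. rewrite Hy, Hv. ring. }
  destruct (zero_of_wronskians d e (Hz y1 v1 S1) (Hz y2 v2 S2) x) as [A B].
  unfold d, e in A, B. lra.
Qed.

Lemma solves_with_data z0 a b : exists y v, solves k y v /\ y z0 = a /\ v z0 = b.
Proof.
  set (A := a * v2 z0 - b * y2 z0). set (B := b * y1 z0 - a * v1 z0).
  exists (fun x => A * y1 x + B * y2 x), (fun x => A * v1 x + B * v2 x).
  split; [apply solves_lincomb; auto|]. specialize (HW z0). unfold wronskian, A, B in *. split.
  - transitivity (a * (y1 z0 * v2 z0 - v1 z0 * y2 z0)); [ring| rewrite HW; ring].
  - transitivity (b * (y1 z0 * v2 z0 - v1 z0 * y2 z0)); [ring| rewrite HW; ring].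
Qed.
End FundamentalSystem.

(** * Solutions at [+oo] when [k] decays exponentially *)

Lemma exp_rate_limit (f f' : R -> R) B rho Z : 0 < rho ->
  (forall t, derivable_pt_lim f t (f' t)) ->
  (forall t, Z <= t -> Rabs (f' t) <= B * exp (- rho * t)) ->
  exists beta, forall z, Z <= z -> Rabs (f z - beta) <= B / rho * exp (- rho * z).
Proof.
  intros Hr Hd Hb.
  assert (HB : 0 <= B).
  { pose proof (Hb Z (Rle_refl _)). pose proof (Rabs_pos (f' Z)). pose proof (exp_pos (- rho * Z)). nra. }
  set (E := fun t => B / rho * exp (- rho * t)).
  assert (HE0 : forall t, 0 <= E t).
  { intros t. unfold E, Rdiv. pose proof (exp_pos (- rho * t)).
    apply Rmult_le_pos; [apply Rmult_le_pos; [auto| left; apply Rinv_0_lt_compat; auto]| lra]. }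
  assert (Hinc : forall a b, Z <= a <= b -> Rabs (f b - f a) <= E a - E b).
  { intros a b Hab. replace (E a - E b) with (- E b - - E a) by ring.
    apply (abs_increment_le f f' (fun t => - E t) (fun t => B * exp (- rho * t)));
      [intros; apply Hd| | lra| intros t Ht; apply Hb; lra].
    intros t _. unfold E.
    apply (derivable_pt_lim_eq _ _ (- (B / rho * (- rho * exp (- rho * t))))); [|field; lra].
    apply derivable_pt_lim_opp, derivable_pt_lim_scal, derivable_pt_lim_exp_lin. }
  (* [f - E] increases, [f + E] decreases *)
  set (g := fun n => f (Z + INR n) - E (Z + INR n)).
  assert (Hgr : Un_growing g).
  { intros n. unfold g. rewrite S_INR. pose proof (pos_INR n).
    pose proof (Hinc (Z + INR n) (Z + (INR n + 1)) ltac:(lra)) as Hi. apply Rabs_le_between in Hi. lra. }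
  assert (Hub : has_ub g).
  { exists (f Z + E Z). intros x [n ->]. unfold g. pose proof (pos_INR n).
    pose proof (Hinc Z (Z + INR n) ltac:(lra)) as Hi. apply Rabs_le_between in Hi.
    pose proof (HE0 (Z + INR n)). lra. }
  destruct (growing_cv g Hgr Hub) as [beta Hbeta]. exists beta. intros z Hz.
  destruct (nat_ge (z - Z)) as [N HN].
  assert (beta <= f z + E z).
  { apply (lim_le g beta (f z + E z) N Hbeta). intros n Hn. apply le_INR in Hn. unfold g.
    pose proof (Hinc z (Z + INR n) ltac:(lra)) as Hi. apply Rabs_le_between in Hi.
    pose proof (HE0 (Z + INR n)). lra. }
  assert (f z - E z <= beta).
  { apply (lim_ge g beta (f z - E z) N Hbeta). intros n Hn. apply le_INR in Hn. unfold g.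
    pose proof (Hinc z (Z + INR n) ltac:(lra)) as Hi. apply Rabs_le_between in Hi. lra. }
  apply Rabs_le_between. unfold E in *. lra.
Qed.

Lemma derivable_pt_lim_inv_affine t : -1 < t ->
  derivable_pt_lim (fun z => / (1 + z)) t (- (/ (1 + t)) ^ 2).
Proof.
  intros Ht.
  apply (derivable_pt_lim_ext (fun z => fct_cte 1 z / (1 + z))); [intros z; unfold fct_cte, Rdiv; ring|].
  apply (derivable_pt_lim_eq _ _ ((0 * (1 + t) - 1 * fct_cte 1 t) / (1 + t)²)).
  - apply (derivable_pt_lim_div (fct_cte 1) (fun z => 1 + z)); [apply derivable_pt_lim_const| |lra].
    apply (derivable_pt_lim_eq _ _ (0 + 1)); [|ring].
    apply derivable_pt_lim_plus; [apply derivable_pt_lim_const| apply derivable_pt_lim_id].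
  - unfold fct_cte, Rsqr. field. lra.
Qed.

Lemma derivable_pt_lim_square (f : R -> R) l x :
  derivable_pt_lim f x l -> derivable_pt_lim (fun t => f t ^ 2) x (2 * f x * l).
Proof.
  intros Hf. apply (derivable_pt_lim_eq _ _ ((INR 2 * f x ^ Init.Nat.pred 2) * l)); [|simpl; ring].
  apply (derivable_pt_lim_comp f (fun u => u ^ 2)); auto. apply derivable_pt_lim_pow.
Qed.

(** Pointwise inequality behind the energy estimate of [solution_growth]:
    with [m = 1/P] and [w = y m], the derivative of [v^2 + w^2] is at most
    [(m + E) (v^2 + w^2)] whenever [|k| P <= E]. *)
Lemma energy_inequality v y m k P E : m * P = 1 -> 0 < m -> Rabs k * P <= E ->
  2 * v * (k * y) + 2 * (y * m) * (v * m + y * (- m ^ 2))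
  <= (v ^ 2 + (y * m) ^ 2) * m + (v ^ 2 + (y * m) ^ 2) * E.
Proof.
  intros HmP Hm HK. set (w := y * m).
  assert (Hy : y = w * P) by (unfold w; rewrite Rmult_assoc, HmP; ring).
  assert (H1 : 2 * v * (k * y) <= Rabs k * P * (v ^ 2 + w ^ 2)).
  { rewrite Hy. assert (0 <= P) by nra.
    assert (2 * (v * w) * k <= (v ^ 2 + w ^ 2) * Rabs k).
    { assert (0 <= (v - w) ^ 2) by apply pow2_ge_0. assert (0 <= (v + w) ^ 2) by apply pow2_ge_0.
      destruct (Rle_or_lt 0 k) as [Hk0|Hk0];
        [rewrite Rabs_right by lra| rewrite Rabs_left by lra]; nra. }
    nra. }
  assert (H2 : 2 * w * (v * m) <= (v ^ 2 + w ^ 2) * m)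
    by (assert (0 <= (v - w) ^ 2) by apply pow2_ge_0; nra).
  assert (H3 : 0 <= (v ^ 2 + w ^ 2) * (E - Rabs k * P)) by (apply Rmult_le_pos; nra).
  assert (H4 : 0 <= w * w * m ^ 2) by nra.
  replace (2 * w * (v * m + y * - m ^ 2)) with (2 * w * (v * m) - 2 * (w * w) * m) by (unfold w; ring).
  nra.
Qed.

Section DecayingPotential.
Variables (k : R -> R) (A kap Z : R).
Hypotheses (Hkap : 0 < kap) (HA : 0 <= A) (HZ : 0 <= Z)
  (Hkb : forall z, Z <= z -> Rabs (k z) <= A * exp (- kap * z)).

Definition damped_energy (y v : R -> R) (b rho t : R) : R :=
  (v t ^ 2 + (y t * / (1 + t)) ^ 2) * / (1 + t) * exp (b * exp (- rho * t)).

Lemma derivable_pt_lim_damped_energy y v b rho t : solves k y v -> -1 < t ->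
  derivable_pt_lim (damped_energy y v b rho) t
    (let m := / (1 + t) in let H := v t ^ 2 + (y t * m) ^ 2 in let E := exp (b * exp (- rho * t)) in
     (2 * v t * (k t * y t) + 2 * (y t * m) * (v t * m + y t * (- m ^ 2))) * m * E
     + H * (- m ^ 2) * E + H * m * (E * (b * (- rho * exp (- rho * t))))).
Proof.
  intros [Sy Sv] Ht. cbv zeta.
  set (m := fun t => / (1 + t)).
  assert (Hm : derivable_pt_lim m t (- m t ^ 2)) by (apply derivable_pt_lim_inv_affine; auto).
  assert (HH : derivable_pt_lim (fun t => v t ^ 2 + (y t * m t) ^ 2) t
                 (2 * v t * (k t * y t) + 2 * (y t * m t) * (v t * m t + y t * (- m t ^ 2)))).
  { apply (derivable_pt_lim_plus (fun t => v t ^ 2) (fun t => (y t * m t) ^ 2)).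
    - apply derivable_pt_lim_square, Sv.
    - apply (derivable_pt_lim_square (fun t => y t * m t)), (derivable_pt_lim_mult y m); auto. }
  assert (He : derivable_pt_lim (fun t => exp (b * exp (- rho * t))) t
                 (exp (b * exp (- rho * t)) * (b * (- rho * exp (- rho * t))))).
  { apply (derivable_pt_lim_comp (fun t => b * exp (- rho * t)) exp); [|apply derivable_pt_lim_exp].
    apply derivable_pt_lim_scal, derivable_pt_lim_exp_lin. }
  apply (derivable_pt_lim_eq _ _
    (((2 * v t * (k t * y t) + 2 * (y t * m t) * (v t * m t + y t * (- m t ^ 2))) * m t
      + (v t ^ 2 + (y t * m t) ^ 2) * - m t ^ 2) * exp (b * exp (- rho * t))
     + ((v t ^ 2 + (y t * m t) ^ 2) * m t) * (exp (b * exp (- rho * t)) * (b * (- rho * exp (- rho * t)))))); [|unfold m; ring].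
  apply (derivable_pt_lim_ext (fun t => (v t ^ 2 + (y t * m t) ^ 2) * m t * exp (b * exp (- rho * t))));
    [intros; reflexivity|].
  apply (derivable_pt_lim_mult (fun t => (v t ^ 2 + (y t * m t) ^ 2) * m t)
           (fun t => exp (b * exp (- rho * t)))); auto.
  apply (derivable_pt_lim_mult (fun t => v t ^ 2 + (y t * m t) ^ 2) m); auto.
Qed.

Lemma potential_weighted_decay : exists A2 rho, 0 < rho /\ 0 <= A2 /\
  forall t, Z <= t -> Rabs (k t) * (1 + t) <= A2 * exp (- rho * t).
Proof.
  set (rho := kap / 2). set (C := 1 + 1 / rho).
  assert (Hrho : 0 < rho) by (unfold rho; lra).
  exists (A * C), rho. split; [auto|]. split.
  { unfold C, Rdiv. rewrite Rmult_1_l. pose proof (Rinv_0_lt_compat rho Hrho). nra. }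
  intros t Ht. pose proof (affine_le_exp rho Hrho t ltac:(lra)) as Hl. fold C in Hl.
  replace (A * C * exp (- rho * t)) with (A * exp (- kap * t) * (C * exp (rho * t))).
  - apply Rmult_le_compat; auto; [apply Rabs_pos| lra].
  - replace (- rho * t) with (- kap * t + rho * t) by (unfold rho; field). rewrite exp_plus. ring.
Qed.

Lemma damped_energy_nonincreasing y v A2 rho : solves k y v -> 0 < rho ->
  (forall t, Z <= t -> Rabs (k t) * (1 + t) <= A2 * exp (- rho * t)) ->
  forall z, Z <= z -> damped_energy y v (A2 / rho) rho z <= damped_energy y v (A2 / rho) rho Z.
Proof.
  intros S Hrho HkP z Hz.
  apply (nonincreasing_of_deriv _ _ Z z
           (fun t Ht => derivable_pt_lim_damped_energy y v (A2 / rho) rho t S ltac:(lra))); auto.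
  intros t Ht. cbv zeta.
  set (m := / (1 + t)). set (H := v t ^ 2 + (y t * m) ^ 2). set (E := exp (A2 / rho * exp (- rho * t))).
  assert (HmP : m * (1 + t) = 1) by (unfold m; field; lra).
  assert (Hmp : 0 < m) by (unfold m; apply Rinv_0_lt_compat; lra).
  pose proof (energy_inequality (v t) (y t) m (k t) (1 + t) (A2 * exp (- rho * t))
                HmP Hmp (HkP t ltac:(lra))) as Hen. fold H in Hen.
  assert (0 < m * E) by (apply Rmult_lt_0_compat; [auto| apply exp_pos]).
  set (dH := 2 * v t * (k t * y t) + 2 * (y t * m) * (v t * m + y t * - m ^ 2)) in *.
  replace (dH * m * E + H * - m ^ 2 * E + H * m * (E * (A2 / rho * (- rho * exp (- rho * t)))))
    with ((m * E) * (dH - (H * m + H * (A2 * exp (- rho * t))))) by (field; lra).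
  nra.
Qed.

Lemma solution_growth y v : solves k y v ->
  exists D, 0 <= D /\ forall z, Z <= z -> v z ^ 2 <= D * (1 + z) /\ y z ^ 2 <= D * (1 + z) ^ 3.
Proof.
  intros S. destruct potential_weighted_decay as [A2 [rho [Hrho [HA2 HkP]]]].
  pose proof (damped_energy_nonincreasing y v A2 rho S Hrho HkP) as HQ.
  set (Q := damped_energy y v (A2 / rho) rho) in HQ.
  assert (Hb : 0 <= A2 / rho) by (apply Rdiv_le_0_compat; lra).
  assert (Hdecomp : forall t, 0 <= t -> exists m, m * (1 + t) = 1 /\ 0 < m /\
            (v t ^ 2 + (y t * m) ^ 2) * m <= Q t /\ 0 <= Q t).
  { intros t Ht. exists (/ (1 + t)). split; [field; lra|]. split; [apply Rinv_0_lt_compat; lra|].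
    pose proof (pow2_ge_0 (v t)). pose proof (pow2_ge_0 (y t * / (1 + t))).
    pose proof (exp_pos (- rho * t)).
    assert (1 <= exp (A2 / rho * exp (- rho * t)))
      by (pose proof (exp_ineq1_le (A2 / rho * exp (- rho * t))); nra).
    assert (0 <= (v t ^ 2 + (y t * / (1 + t)) ^ 2) * / (1 + t))
      by (apply Rmult_le_pos; [lra| left; apply Rinv_0_lt_compat; lra]).
    unfold Q, damped_energy. split; nra. }
  exists (Q Z). destruct (Hdecomp Z HZ) as [_ [_ [_ [_ HQ0]]]]. split; [exact HQ0|].
  intros z Hz. destruct (Hdecomp z ltac:(lra)) as [m [HmP [Hmp [HQz _]]]]. specialize (HQ z Hz).
  assert (HHz : v z ^ 2 + (y z * m) ^ 2 <= Q Z * (1 + z)).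
  { replace (v z ^ 2 + (y z * m) ^ 2) with ((v z ^ 2 + (y z * m) ^ 2) * m * (1 + z))
      by (rewrite Rmult_assoc, HmP; ring).
    apply Rmult_le_compat_r; lra. }
  pose proof (pow2_ge_0 (v z)). pose proof (pow2_ge_0 (y z * m)).
  split; [lra|].
  replace (y z) with ((y z * m) * (1 + z)) by (rewrite Rmult_assoc, HmP; ring).
  replace (Q Z * (1 + z) ^ 3) with ((Q Z * (1 + z)) * (1 + z) ^ 2) by ring.
  rewrite Rpow_mult_distr. apply Rmult_le_compat_r; [apply pow2_ge_0| lra].
Qed.

(** The forcing term [k y] of [v' = k y] decays exponentially, since [y]
    grows at most polynomially. *)
Lemma forcing_exp_decay y v : solves k y v ->
  exists B0, 0 <= B0 /\ forall t, Z <= t -> Rabs (k t * y t) <= B0 * exp (- (kap / 2) * t).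
Proof.
  intros S. destruct (solution_growth y v S) as [D [HD HDb]].
  set (q := kap / 4). assert (Hq : 0 < q) by (unfold q; lra).
  set (C := 1 + 1 / q). assert (HC : 0 < C).
  { unfold C, Rdiv. rewrite Rmult_1_l. pose proof (Rinv_0_lt_compat q Hq). lra. }
  assert (Hy : forall z, Z <= z -> Rabs (y z) <= (D + 1) / 2 * (1 + z) ^ 2).
  { intros z Hz. destruct (HDb z Hz) as [_ H2].
    set (P := 1 + z). assert (HP : 1 <= P) by (unfold P; lra). fold P in H2.
    assert (y z ^ 2 <= D * P ^ 4).
    { eapply Rle_trans; [exact H2|]. replace (P ^ 4) with (P ^ 3 * P) by ring.
      assert (0 <= P ^ 3) by (apply pow_le; lra). nra. }
    assert (0 < P ^ 2) by (apply pow_lt; lra).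
    assert (2 * Rabs (y z) * P ^ 2 <= y z ^ 2 + P ^ 4).
    { assert (0 <= (Rabs (y z) - P ^ 2) ^ 2) by apply pow2_ge_0. rewrite <- (pow2_abs (y z)). nra. }
    nra. }
  exists (A * ((D + 1) / 2) * C ^ 2). split; [apply Rmult_le_pos; [nra| apply pow2_ge_0]|].
  intros t Ht. rewrite Rabs_mult. specialize (Hy t Ht). specialize (Hkb t Ht).
  pose proof (affine_le_exp q Hq t ltac:(lra)) as Hl. fold C in Hl.
  assert (Hl2 : (1 + t) ^ 2 <= C ^ 2 * exp (2 * q * t)).
  { replace (2 * q * t) with (q * t + q * t) by ring. rewrite exp_plus.
    replace (C ^ 2 * (exp (q * t) * exp (q * t))) with ((C * exp (q * t)) ^ 2) by ring.
    apply pow_incr. split; lra. }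
  replace (A * ((D + 1) / 2) * C ^ 2 * exp (- (kap / 2) * t))
    with (A * exp (- kap * t) * ((D + 1) / 2 * (C ^ 2 * exp (2 * q * t)))).
  - apply Rmult_le_compat; auto using Rabs_pos.
    eapply Rle_trans; [exact Hy|]. apply Rmult_le_compat_l; [lra| auto].
  - replace (- (kap / 2) * t) with (- kap * t + 2 * q * t) by (unfold q; field). rewrite exp_plus. ring.
Qed.

Lemma solution_affine_asymptotics y v : solves k y v ->
  exists beta gam B rho, 0 < rho /\ 0 <= B /\ forall z, Z <= z ->
    Rabs (v z - beta) <= B * exp (- rho * z) /\ Rabs (y z - beta * z - gam) <= B * exp (- rho * z).
Proof.
  intros S. destruct (forcing_exp_decay y v S) as [B0 [HB0 Hvd]]. destruct S as [Sy Sv].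
  set (rho := kap / 2). assert (Hrho : 0 < rho) by (unfold rho; lra).
  destruct (exp_rate_limit v (fun t => k t * y t) B0 rho Z Hrho Sv Hvd) as [beta Hbeta].
  destruct (exp_rate_limit (fun t => y t - beta * t) (fun t => v t - beta) (B0 / rho) rho Z Hrho)
    as [gam Hgam]; [| exact Hbeta|].
  { intros t. apply derivable_pt_lim_minus; auto.
    apply (derivable_pt_lim_eq _ _ (beta * 1)); [|ring]. apply derivable_pt_lim_scal, derivable_pt_lim_id. }
  assert (0 <= B0 / rho) by (apply Rdiv_le_0_compat; lra).
  assert (0 <= B0 / rho / rho) by (apply Rdiv_le_0_compat; lra).
  exists beta, gam, (B0 / rho + B0 / rho / rho), rho. split; [auto|]. split; [lra|].
  intros z Hz. pose proof (exp_pos (- rho * z)). specialize (Hbeta z Hz). specialize (Hgam z Hz). split; nra.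
Qed.

Lemma zero_of_exp_bound w K r : 0 < r -> (forall z, Z <= z -> Rabs w <= K * exp (- r * z)) -> w = 0.
Proof.
  intros Hr H. destruct (Req_dec w 0) as [|Hw]; auto. exfalso.
  assert (Hw' : 0 < Rabs w) by (apply Rabs_pos_lt; auto).
  assert (HK : 0 < K) by (pose proof (H Z (Rle_refl _)); pose proof (exp_pos (- r * Z)); nra).
  destruct (exp_decay_small r (Rabs w / K) Hr) as [Z1 HZ1].
  { unfold Rdiv; apply Rmult_lt_0_compat; [auto| apply Rinv_0_lt_compat; auto]. }
  set (z := Rmax Z Z1). specialize (H z (Rmax_l _ _)). specialize (HZ1 z (Rmax_r _ _)).
  assert (K * exp (- r * z) < K * (Rabs w / K)) by (apply Rmult_lt_compat_l; auto).
  replace (K * (Rabs w / K)) with (Rabs w) in H0 by (field; lra). lra.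
Qed.

(** A solution decaying exponentially has zero Wronskian with every
    solution, since the latter grow at most linearly. *)
Lemma wronskian_zero_of_decay y v yi vi B rho : 0 < rho -> 0 <= B ->
  solves k y v -> solves k yi vi ->
  (forall z, Z <= z -> Rabs (v z) <= B * exp (- rho * z) /\ Rabs (y z) <= B * exp (- rho * z)) ->
  forall x, wronskian y v yi vi x = 0.
Proof.
  intros Hr HB S Si Hsm x.
  destruct (solution_affine_asymptotics yi vi Si) as [bi [gi [Bi [ri [Hri [HBi Hi]]]]]].
  set (G := Rabs bi + Rabs gi + Bi).
  assert (HG : 0 <= G) by (unfold G; pose proof (Rabs_pos bi); pose proof (Rabs_pos gi); lra).
  set (C := 1 + 1 / (rho / 2)).
  apply (zero_of_exp_bound _ (2 * B * G * C) (rho / 2)); [lra|].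
  intros z Hz. rewrite (wronskian_const k y v yi vi S Si x z). unfold wronskian.
  destruct (Hi z Hz) as [Hv Hy]. destruct (Hsm z Hz) as [Hv0 Hy0].
  pose proof (exp_decay_le1 ri z ltac:(lra) ltac:(lra)). pose proof (exp_pos (- ri * z)).
  assert (Hvi : Rabs (vi z) <= G).
  { unfold G. replace (vi z) with ((vi z - bi) + bi) by ring.
    eapply Rle_trans; [apply Rabs_triang|]. pose proof (Rabs_pos gi). nra. }
  assert (Hyi : Rabs (yi z) <= G * (1 + z)).
  { replace (yi z) with ((yi z - bi * z - gi) + bi * z + gi) by ring.
    eapply Rle_trans; [apply Rabs_triang|].
    eapply Rle_trans; [apply Rplus_le_compat_r; apply Rabs_triang|].
    rewrite Rabs_mult, (Rabs_right z) by lra. unfold G.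
    pose proof (Rabs_pos bi). pose proof (Rabs_pos gi). nra. }
  pose proof (affine_le_exp (rho / 2) ltac:(lra) z ltac:(lra)) as Hl. fold C in Hl.
  pose proof (exp_pos (- rho * z)) as Hep.
  assert (Hs : Rabs (y z * vi z - v z * yi z) <= (2 * B * G) * (exp (- rho * z) * (1 + z))).
  { unfold Rminus. eapply Rle_trans; [apply Rabs_triang|]. rewrite Rabs_Ropp, !Rabs_mult.
    assert (Rabs (y z) * Rabs (vi z) <= B * exp (- rho * z) * G)
      by (apply Rmult_le_compat; auto using Rabs_pos).
    assert (Rabs (v z) * Rabs (yi z) <= B * exp (- rho * z) * (G * (1 + z)))
      by (apply Rmult_le_compat; auto using Rabs_pos).
    assert (0 <= B * exp (- rho * z) * G * z) by (apply Rmult_le_pos; [apply Rmult_le_pos; [nra| auto]| lra]).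
    nra. }
  eapply Rle_trans; [exact Hs|]. rewrite (Rmult_assoc (2 * B * G)).
  apply Rmult_le_compat_l; [nra|].
  replace (- (rho / 2) * z) with (- rho * z + rho / 2 * z) by field. rewrite exp_plus.
  replace (C * (exp (- rho * z) * exp (rho / 2 * z))) with (exp (- rho * z) * (C * exp (rho / 2 * z))) by ring.
  apply Rmult_le_compat_l; lra.
Qed.

Lemma ratio_to_zero (y v : R -> R) :
  (forall T, 0 < T -> exists M, forall z, z > M -> T * Rabs (v z) < Rabs (y z)) ->
  (exists M, forall z, z > M -> y z <> 0) /\ lim_pinf (fun z => v z / y z) 0.
Proof.
  intros Hdom. split.
  - destruct (Hdom 1 ltac:(lra)) as [M HM]. exists M. intros z Hz Hy.
    specialize (HM z Hz). rewrite Hy, Rabs_R0 in HM. pose proof (Rabs_pos (v z)). lra.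
  - intros eps Heps. destruct (Hdom (/ eps) ltac:(apply Rinv_0_lt_compat; lra)) as [M HM].
    exists M. intros z Hz. specialize (HM z Hz).
    assert (Hy : 0 < Rabs (y z)) by (pose proof (Rabs_pos (v z)); pose proof (Rinv_0_lt_compat eps Heps); nra).
    rewrite Rminus_0_r. unfold Rdiv. rewrite Rabs_mult, Rabs_inv.
    apply (Rmult_lt_reg_r (Rabs (y z) * / eps)); [apply Rmult_lt_0_compat; [lra| apply Rinv_0_lt_compat; lra]|].
    replace (Rabs (v z) * / Rabs (y z) * (Rabs (y z) * / eps)) with (/ eps * Rabs (v z)) by (field; lra).
    replace (eps * (Rabs (y z) * / eps)) with (Rabs (y z)) by (field; lra). exact HM.
Qed.

Lemma dominance_constant_limit (y v : R -> R) gam B rho Z0 : 0 < rho -> gam <> 0 ->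
  (forall z, Z0 <= z -> Rabs (v z) <= B * exp (- rho * z) /\ Rabs (y z - gam) <= B * exp (- rho * z)) ->
  forall T, 0 < T -> exists M, forall z, z > M -> T * Rabs (v z) < Rabs (y z).
Proof.
  intros Hr Hga Hb T HT.
  assert (Hg : 0 < Rabs gam) by (apply Rabs_pos_lt; auto).
  assert (HB : 0 <= B).
  { destruct (Hb Z0 (Rle_refl _)) as [H _]. pose proof (Rabs_pos (v Z0)). pose proof (exp_pos (- rho * Z0)). nra. }
  set (e := Rabs gam / (2 * (T + 1))).
  assert (He : 0 < e) by (apply Rdiv_lt_0_compat; lra).
  destruct (exp_decay_small rho (e / (B + 1)) Hr) as [M HM]; [apply Rdiv_lt_0_compat; lra|].
  exists (Rmax M Z0). intros z Hz.
  destruct (Hb z ltac:(pose proof (Rmax_r M Z0); lra)) as [H1 H2].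
  specialize (HM z ltac:(pose proof (Rmax_l M Z0); lra)). pose proof (exp_pos (- rho * z)).
  assert (HBe : B * exp (- rho * z) <= e).
  { apply (Rle_trans _ ((B + 1) * (e / (B + 1)))); [nra| right; field; lra]. }
  assert (Rabs gam <= Rabs (y z) + Rabs (y z - gam)).
  { replace gam with (y z - (y z - gam)) at 1 by ring. unfold Rminus at 1.
    eapply Rle_trans; [apply Rabs_triang|]. rewrite Rabs_Ropp. lra. }
  assert (T * e < Rabs gam / 2) by (unfold e; apply (Rmult_lt_reg_r (2 * (T + 1))); [lra|]; field_simplify; nra).
  assert (T * Rabs (v z) <= T * e) by (apply Rmult_le_compat_l; lra).
  assert (e <= Rabs gam / 2) by (apply Rmult_le_compat_l; [lra| apply Rinv_le_contravar; lra]).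
  lra.
Qed.

Lemma dominance_linear_growth (y v : R -> R) beta gam B rho Z0 : 0 < rho -> 0 <= B -> beta <> 0 ->
  (forall z, Z0 <= z -> Rabs (v z - beta) <= B * exp (- rho * z) /\
                        Rabs (y z - beta * z - gam) <= B * exp (- rho * z)) ->
  forall T, 0 < T -> exists M, forall z, z > M -> T * Rabs (v z) < Rabs (y z).
Proof.
  intros Hr HB Hbe Hb T HT.
  assert (Hbp : 0 < Rabs beta) by (apply Rabs_pos_lt; auto).
  set (N := T * (Rabs beta + B) + Rabs gam + B + 1).
  exists (Rmax (Rmax Z0 0) (N / Rabs beta)). intros z Hz.
  assert (HzZ : Z0 <= z /\ 0 <= z /\ N / Rabs beta < z).
  { pose proof (Rmax_l Z0 0). pose proof (Rmax_r Z0 0).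
    pose proof (Rmax_l (Rmax Z0 0) (N / Rabs beta)). pose proof (Rmax_r (Rmax Z0 0) (N / Rabs beta)).
    lra. }
  assert (Hbig : N < Rabs beta * z).
  { replace N with (Rabs beta * (N / Rabs beta)) by (field; lra). apply Rmult_lt_compat_l; lra. }
  destruct (Hb z ltac:(lra)) as [H1 H2].
  pose proof (exp_decay_le1 rho z ltac:(lra) ltac:(lra)). pose proof (exp_pos (- rho * z)).
  assert (HBe : B * exp (- rho * z) <= B) by nra.
  assert (Hv : Rabs (v z) <= Rabs beta + B).
  { replace (v z) with ((v z - beta) + beta) by ring. eapply Rle_trans; [apply Rabs_triang|]. lra. }
  assert (Hy : Rabs (beta * z) <= Rabs (y z) + Rabs (y z - beta * z - gam) + Rabs gam).
  { replace (beta * z) with (y z - (y z - beta * z - gam) - gam) at 1 by ring.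
    unfold Rminus at 1. eapply Rle_trans; [apply Rabs_triang|]. rewrite Rabs_Ropp.
    unfold Rminus. eapply Rle_trans; [apply Rplus_le_compat_r; apply Rabs_triang|].
    rewrite Rabs_Ropp. lra. }
  rewrite Rabs_mult, (Rabs_right z) in Hy by lra.
  assert (T * Rabs (v z) <= T * (Rabs beta + B)) by (apply Rmult_le_compat_l; lra).
  unfold N in Hbig. lra.
Qed.

(** Main result at [+oo]: for every nontrivial solution, [y] is eventually
    nonzero and [y' / y -> 0].  If both [beta] and [gam] vanished, the
    solution would decay and hence vanish identically. *)
Lemma log_derivative_pinf y1 v1 y2 v2 y v :
  solves k y1 v1 -> solves k y2 v2 -> (forall x, wronskian y1 v1 y2 v2 x = 1) ->
  solves k y v -> (exists z0, ~ (y z0 = 0 /\ v z0 = 0)) ->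
  (exists M, forall z, z > M -> y z <> 0) /\ lim_pinf (fun z => v z / y z) 0.
Proof.
  intros S1 S2 HW S [z0 Hz0]. apply ratio_to_zero.
  destruct (solution_affine_asymptotics y v S) as [be [ga [B [rho [Hr [HB Hb]]]]]].
  destruct (Req_dec be 0) as [->|Hbe]; [destruct (Req_dec ga 0) as [->|Hga]|].
  - exfalso. apply Hz0.
    assert (Hsm : forall z, Z <= z -> Rabs (v z) <= B * exp (- rho * z) /\ Rabs (y z) <= B * exp (- rho * z)).
    { intros z Hz. destruct (Hb z Hz) as [H1 H2]. rewrite Rminus_0_r in H1.
      replace (y z - 0 * z - 0) with (y z) in H2 by ring. auto. }
    apply (zero_of_wronskians y1 v1 y2 v2 HW);
      apply (wronskian_zero_of_decay y v _ _ B rho); auto.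
  - apply (dominance_constant_limit y v ga B rho Z); auto.
    intros z Hz. destruct (Hb z Hz) as [H1 H2]. rewrite Rminus_0_r in H1.
    replace (y z - 0 * z - ga) with (y z - ga) in H2 by ring. auto.
  - apply (dominance_linear_growth y v be ga B rho Z); auto.
Qed.
End DecayingPotential.

(** * Solutions at [-oo] when [k -> s^2] *)

Lemma exp_growth_lower (y v : R -> R) r a b :
  (forall t, derivable_pt_lim y t (v t)) -> a <= b ->
  (forall t, a < t < b -> r * y t <= v t) -> y a * exp (r * (b - a)) <= y b.
Proof.
  intros Hy Hab Hr.
  assert (y a * exp (- r * a) <= y b * exp (- r * b)).
  { apply (nondecreasing_of_deriv (fun t => y t * exp (- r * t))
      (fun t => (v t + - r * y t) * exp (- r * t))); auto.
    - intros t _. apply derivable_pt_lim_mul_exp, Hy.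
    - intros t Ht. specialize (Hr t Ht). pose proof (exp_pos (- r * t)). nra. }
  apply (Rmult_le_compat_r (exp (r * b))) in H; [|left; apply exp_pos].
  rewrite (Rmult_assoc (y b)), exp_opp_mul, Rmult_1_r, Rmult_assoc, <- exp_plus in H.
  replace (r * (b - a)) with (- r * a + r * b) by ring. exact H.
Qed.

Lemma exp_growth_upper (y v : R -> R) r a b :
  (forall t, derivable_pt_lim y t (v t)) -> a <= b ->
  (forall t, a < t < b -> v t <= r * y t) -> y b <= y a * exp (r * (b - a)).
Proof.
  intros Hy Hab Hr.
  assert (y b * exp (- r * b) <= y a * exp (- r * a)).
  { apply (nonincreasing_of_deriv (fun t => y t * exp (- r * t))
      (fun t => (v t + - r * y t) * exp (- r * t))); auto.
    - intros t _. apply derivable_pt_lim_mul_exp, Hy.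
    - intros t Ht. specialize (Hr t Ht). pose proof (exp_pos (- r * t)). nra. }
  apply (Rmult_le_compat_r (exp (r * b))) in H; [|left; apply exp_pos].
  rewrite (Rmult_assoc (y b)), exp_opp_mul, Rmult_1_r, Rmult_assoc, <- exp_plus in H.
  replace (r * (b - a)) with (- r * a + r * b) by ring. exact H.
Qed.

Lemma derivable_pt_lim_cone_weight k y v r t : solves k y v ->
  derivable_pt_lim (fun t => (v t - r * y t) * exp (r * t)) t ((k t - r ^ 2) * y t * exp (r * t)).
Proof.
  intros [Sy Sv].
  apply (derivable_pt_lim_eq _ _ ((k t * y t - r * v t + r * (v t - r * y t)) * exp (r * t))); [|ring].
  apply (derivable_pt_lim_mul_exp (fun t => v t - r * y t)).
  apply derivable_pt_lim_minus; [apply Sv| apply derivable_pt_lim_scal, Sy].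
Qed.

Lemma half_plane_lower k y v r z1 z : solves k y v -> z1 <= z ->
  (forall t, z1 < t < z -> 0 < y t /\ r ^ 2 <= k t) -> r * y z1 <= v z1 -> r * y z <= v z.
Proof.
  intros S Hz Hk H1.
  assert ((v z1 - r * y z1) * exp (r * z1) <= (v z - r * y z) * exp (r * z)).
  { apply (nondecreasing_of_deriv _ _ z1 z (fun t _ => derivable_pt_lim_cone_weight k y v r t S)); auto.
    intros t Ht. destruct (Hk t Ht). pose proof (exp_pos (r * t)).
    apply Rmult_le_pos; [apply Rmult_le_pos|]; lra. }
  pose proof (exp_pos (r * z1)). pose proof (exp_pos (r * z)).
  assert (0 <= (v z1 - r * y z1) * exp (r * z1)) by (apply Rmult_le_pos; lra).
  nra.
Qed.

Lemma half_plane_upper k y v r z1 z : solves k y v -> z1 <= z ->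
  (forall t, z1 < t < z -> 0 < y t /\ k t <= r ^ 2) -> v z1 <= r * y z1 -> v z <= r * y z.
Proof.
  intros S Hz Hk H1.
  assert ((v z - r * y z) * exp (r * z) <= (v z1 - r * y z1) * exp (r * z1)).
  { apply (nonincreasing_of_deriv _ _ z1 z (fun t _ => derivable_pt_lim_cone_weight k y v r t S)); auto.
    intros t Ht. destruct (Hk t Ht). pose proof (exp_pos (r * t)).
    assert (0 <= (r ^ 2 - k t) * y t * exp (r * t)) by (apply Rmult_le_pos; [apply Rmult_le_pos|]; lra).
    nra. }
  pose proof (exp_pos (r * z1)). pose proof (exp_pos (r * z)).
  assert ((v z1 - r * y z1) * exp (r * z1) <= 0) by (assert (v z1 - r * y z1 <= 0) by lra; nra).
  nra.
Qed.

Lemma band_invariance k y v s kap Z0 z1 : solves k y v -> 0 < s -> 0 < kap -> kap <= s ->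
  (forall t, t <= Z0 -> Rabs (k t - s ^ 2) <= s * kap) -> z1 <= Z0 ->
  0 < y z1 -> Rabs (v z1 - s * y z1) <= kap * y z1 ->
  forall z, z1 <= z <= Z0 -> 0 < y z /\ Rabs (v z - s * y z) <= kap * y z /\
     y z1 * exp ((s - kap) * (z - z1)) <= y z /\ y z <= y z1 * exp ((s + kap) * (z - z1)).
Proof.
  intros S Hs Hk Hks Hkb Hz1 Hy1 Hv1. pose proof S as [Sy _].
  assert (Hkl : forall t, t <= Z0 -> (s - kap) ^ 2 <= k t /\ k t <= (s + kap) ^ 2).
  { intros t Ht. specialize (Hkb t Ht). apply Rabs_le_between in Hkb. split; nra. }
  apply Rabs_le_between in Hv1.
  assert (Hcone : forall z, z1 <= z <= Z0 -> (forall t, z1 <= t < z -> 0 < y t) ->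
            (s - kap) * y z <= v z /\ v z <= (s + kap) * y z).
  { intros z Hz Hpos. split.
    - apply (half_plane_lower k y v (s - kap) z1 z S); [lra| |lra].
      intros t Ht. split; [apply Hpos; lra| apply Hkl; lra].
    - apply (half_plane_upper k y v (s + kap) z1 z S); [lra| |lra].
      intros t Ht. split; [apply Hpos; lra| apply Hkl; lra]. }
  assert (Hpos : forall z, z1 <= z <= Z0 -> 0 < y z).
  { apply (continuity_induction y z1 Z0 Hz1); [intros t; eapply continuity_of_derivable, Sy|].
    intros z Hz Hpos.
    assert (y z1 * exp ((s - kap) * (z - z1)) <= y z).
    { apply (exp_growth_lower y v); auto; [lra|].
      intros t Ht. apply Hcone; [lra| intros; apply Hpos; lra]. }
    pose proof (exp_pos ((s - kap) * (z - z1))). nra. }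
  intros z Hz.
  assert (Hp' : forall t, z1 <= t < z -> 0 < y t) by (intros t Ht; apply Hpos; lra).
  destruct (Hcone z Hz Hp') as [H1 H2].
  split; [apply Hpos; auto|]. split; [apply Rabs_le_between; lra|]. split.
  - apply (exp_growth_lower y v); auto; [lra|].
    intros t Ht. apply Hcone; [lra| intros; apply Hpos; lra].
  - apply (exp_growth_upper y v); auto; [lra|].
    intros t Ht. apply Hcone; [lra| intros; apply Hpos; lra].
Qed.

Lemma exp_tail_null c r a : 0 < r -> Un_cv (fun n => c * exp (- r * (a + INR n))) 0.
Proof.
  intros Hr e He.
  destruct (exp_decay_small r (e / (Rabs c + 1)) Hr) as [Z1 HZ1].
  { apply Rdiv_lt_0_compat; [lra| pose proof (Rabs_pos c); lra]. }
  destruct (nat_ge (Z1 - a)) as [N HN]. exists N. intros n Hn.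
  apply le_INR in Hn. unfold Rdist. rewrite Rminus_0_r, Rabs_mult, (Rabs_right (exp _)) by (left; apply exp_pos).
  specialize (HZ1 (a + INR n) ltac:(lra)). pose proof (Rabs_pos c).
  apply (Rle_lt_trans _ ((Rabs c + 1) * exp (- r * (a + INR n)))).
  - apply Rmult_le_compat_r; [left; apply exp_pos| lra].
  - replace e with ((Rabs c + 1) * (e / (Rabs c + 1))) by (field; lra).
    apply Rmult_lt_compat_l; lra.
Qed.

Section MinusInfinity.
Variables (k y1 v1 y2 v2 : R -> R) (s Zs : R).
Hypotheses (S1 : solves k y1 v1) (S2 : solves k y2 v2)
  (HW : forall x, wronskian y1 v1 y2 v2 x = 1) (Hs : 0 < s)
  (Hk : forall eps, eps > 0 -> exists M, forall t, t < M -> Rabs (k t - s ^ 2) < eps).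
Hypothesis HZs : forall t, t <= Zs -> Rabs (k t - s ^ 2) <= s * (s / 2).

Lemma potential_close kap : 0 < kap ->
  exists Z0, forall t, t <= Z0 -> Rabs (k t - s ^ 2) <= s * kap.
Proof.
  intros Hkap. destruct (Hk (s * kap) ltac:(nra)) as [M HM].
  exists (M - 1). intros t Ht. left. apply HM. lra.
Qed.

(** The solution with data [(1, s)] at [-N]: it starts on the axis of the cone. *)
Let Yn (N : nat) x := (v2 (- INR N) - s * y2 (- INR N)) * y1 x + (s * y1 (- INR N) - v1 (- INR N)) * y2 x.
Let Vn (N : nat) x := (v2 (- INR N) - s * y2 (- INR N)) * v1 x + (s * y1 (- INR N) - v1 (- INR N)) * v2 x.
Let slope (N : nat) := Vn N Zs / Yn N Zs.

Lemma normalized_solves N : solves k (Yn N) (Vn N).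
Proof. apply solves_lincomb; auto. Qed.

Lemma normalized_data N : Yn N (- INR N) = 1 /\ Vn N (- INR N) = s.
Proof.
  specialize (HW (- INR N)). unfold Yn, Vn, wronskian in *. split.
  - rewrite <- HW. ring.
  - transitivity (s * (y1 (- INR N) * v2 (- INR N) - v1 (- INR N) * y2 (- INR N))); [ring| rewrite HW; ring].
Qed.

Lemma normalized_band kap Z0 : 0 < kap -> kap <= s ->
  (forall t, t <= Z0 -> Rabs (k t - s ^ 2) <= s * kap) ->
  forall N z, - INR N <= z <= Z0 -> 0 < Yn N z /\ Rabs (Vn N z - s * Yn N z) <= kap * Yn N z /\
    exp ((s - kap) * (z + INR N)) <= Yn N z.
Proof.
  intros Hkap Hkaps HZ0 N z Hz. destruct (normalized_data N) as [E1 E2].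
  destruct (band_invariance k (Yn N) (Vn N) s kap Z0 (- INR N) (normalized_solves N) Hs Hkap Hkaps HZ0)
    with (z := z) as [B1 [B2 [B3 _]]]; [lra| rewrite E1; lra| | lra|].
  - rewrite E1, E2, Rmult_1_r, Rminus_eq_0, Rabs_R0. lra.
  - rewrite E1, Rmult_1_l in B3. replace (z - - INR N) with (z + INR N) in B3 by ring. auto.
Qed.

(** The slopes at [Zs] form a Cauchy sequence: two normalized solutions
    have a Wronskian of size [O(Yn M (-N))], while both grow at rate at
    least [s / 2] on [[-N, Zs]]. *)
Lemma slope_cauchy N M : - INR N <= Zs -> (N <= M)%nat ->
  Rabs (slope M - slope N) <= s / 2 * exp (- s * (Zs + INR N)).
Proof.
  intros HN HM. apply le_INR in HM.
  assert (Hk0 : 0 < s / 2) by lra. assert (Hk0s : s / 2 <= s) by lra.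
  destruct (normalized_band _ Zs Hk0 Hk0s HZs N Zs ltac:(lra)) as [P1 [_ P3]].
  destruct (normalized_band _ Zs Hk0 Hk0s HZs M (- INR N) ltac:(lra)) as [Q1 [Q2 _]].
  destruct (band_invariance k (Yn M) (Vn M) s (s / 2) Zs (- INR N) (normalized_solves M)
              Hs Hk0 Hk0s HZs HN Q1 Q2 Zs ltac:(lra)) as [R1 [_ [R3 _]]].
  set (E := exp ((s - s / 2) * (Zs + INR N))).
  replace (Zs - - INR N) with (Zs + INR N) in R3 by ring. fold E in P3, R3.
  assert (HE : 0 < E) by apply exp_pos.
  assert (HEE : exp (- s * (Zs + INR N)) * (E * E) = 1).
  { unfold E. rewrite <- !exp_plus, <- exp_0. f_equal. field. }
  set (D := Vn N Zs * Yn M Zs - Vn M Zs * Yn N Zs).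
  assert (HDb : Rabs D <= s / 2 * Yn M (- INR N)).
  { pose proof (wronskian_const k (Yn M) (Vn M) (Yn N) (Vn N) (normalized_solves M) (normalized_solves N) Zs (- INR N)) as Hc.
    unfold wronskian in Hc. destruct (normalized_data N) as [E1 E2].
    rewrite E1, E2 in Hc.
    replace D with (- (Vn M (- INR N) - s * Yn M (- INR N))) by (unfold D; lra).
    rewrite Rabs_Ropp. exact Q2. }
  replace (slope M - slope N) with (- D / (Yn N Zs * Yn M Zs)) by (unfold slope, D; field; lra).
  unfold Rdiv. rewrite Rabs_mult, Rabs_Ropp, Rabs_inv, Rabs_mult, (Rabs_right (Yn N Zs)), (Rabs_right (Yn M Zs)) by lra.
  apply (Rmult_le_reg_r (Yn N Zs * Yn M Zs)); [apply Rmult_lt_0_compat; lra|].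
  rewrite Rmult_assoc, Rinv_l, Rmult_1_r by (apply Rgt_not_eq, Rmult_lt_0_compat; lra).
  assert (E * (Yn M (- INR N) * E) <= Yn N Zs * Yn M Zs) by (apply Rmult_le_compat; nra).
  assert (0 <= s / 2 * exp (- s * (Zs + INR N))) by (pose proof (exp_pos (- s * (Zs + INR N))); nra).
  apply (Rle_trans _ (s / 2 * exp (- s * (Zs + INR N)) * (E * (Yn M (- INR N) * E))));
    [| apply Rmult_le_compat_l; auto].
  replace (s / 2 * exp (- s * (Zs + INR N)) * (E * (Yn M (- INR N) * E)))
    with (s / 2 * Yn M (- INR N) * (exp (- s * (Zs + INR N)) * (E * E))) by ring.
  rewrite HEE. lra.
Qed.

Lemma slope_limit : exists sg N0, - INR N0 <= Zs /\ Un_cv (fun n => slope (N0 + n)) sg.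
Proof.
  destruct (nat_ge (- Zs)) as [N0 HN0].
  destruct (cv_of_tail (fun n => slope (N0 + n)) (fun n => s / 2 * exp (- s * (Zs + INR N0 + INR n))))
    as [sg [Hsg _]].
  - apply exp_tail_null. lra.
  - intros m n Hmn. replace (Zs + INR N0 + INR n) with (Zs + INR (N0 + n)) by (rewrite plus_INR; ring).
    apply slope_cauchy; [rewrite plus_INR; pose proof (pos_INR n); lra| lia].
  - exists sg, N0. split; [lra| exact Hsg].
Qed.

Section LimitSolution.
Variables (p1 q1 p2 q2 : R -> R) (sg : R) (N0 : nat).
Hypotheses (SP1 : solves k p1 q1) (SP2 : solves k p2 q2)
  (P1a : p1 Zs = 1) (P1b : q1 Zs = 0) (P2a : p2 Zs = 0) (P2b : q2 Zs = 1)
  (HN0 : - INR N0 <= Zs) (Hsg : Un_cv (fun n => slope (N0 + n)) sg).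

Lemma normalized_decomposition N x : (N0 <= N)%nat ->
  Yn N x / Yn N Zs = p1 x + slope N * p2 x /\ Vn N x / Yn N Zs = q1 x + slope N * q2 x.
Proof.
  intros HN. apply le_INR in HN.
  assert (HYp : 0 < Yn N Zs).
  { apply (normalized_band (s / 2) Zs ltac:(lra) ltac:(lra) HZs N Zs). lra. }
  assert (Sc : solves k (fun x => / Yn N Zs * Yn N x) (fun x => / Yn N Zs * Vn N x)).
  { destruct (normalized_solves N) as [H1 H2]. split; intros t.
    - apply derivable_pt_lim_scal, H1.
    - eapply derivable_pt_lim_eq; [apply derivable_pt_lim_scal, H2| ring]. }
  destruct (solves_unique k y1 v1 y2 v2 S1 S2 HW _ _ _ _ Sc (solves_add_scaled k p1 q1 p2 q2 (slope N) SP1 SP2) Zs)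
    with (x := x) as [A B].
  - rewrite P1a, P2a. field. lra.
  - rewrite P1b, P2b. unfold slope. field. lra.
  - unfold Rdiv. rewrite !(Rmult_comm _ (/ Yn N Zs)). auto.
Qed.

Lemma rescaled_band kap Zk N z : 0 < kap -> kap <= s / 2 -> Zk <= Zs ->
  (forall t, t <= Zk -> Rabs (k t - s ^ 2) <= s * kap) -> (N0 <= N)%nat -> - INR N <= z <= Zk ->
  exp (- (s + s / 2) * (Zs - z)) <= p1 z + slope N * p2 z /\
  (q1 z + slope N * q2 z) - (s + kap) * (p1 z + slope N * p2 z) <= 0 /\
  0 <= (q1 z + slope N * q2 z) - (s - kap) * (p1 z + slope N * p2 z).
Proof.
  intros Hkap Hkk HZk HkZ HN Hz.
  destruct (normalized_decomposition N z HN) as [I1 I2]. rewrite <- I1, <- I2.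
  destruct (normalized_band kap Zk Hkap ltac:(lra) HkZ N z Hz) as [B1 [B2 _]].
  assert (B2' : Rabs (Vn N z - s * Yn N z) <= s / 2 * Yn N z) by nra.
  destruct (band_invariance k (Yn N) (Vn N) s (s / 2) Zs z (normalized_solves N) Hs ltac:(lra) ltac:(lra)
              HZs ltac:(lra) B1 B2' Zs ltac:(lra)) as [C1 [_ [_ C4]]].
  set (w := exp (- (s + s / 2) * (Zs - z))).
  assert (Hw : 0 < w) by apply exp_pos.
  pose proof (exp_pos ((s + s / 2) * (Zs - z))).
  pose proof (exp_opp_mul (s + s / 2) (Zs - z)) as HE. fold w in HE.
  apply Rabs_le_between in B2.
  replace (Vn N z / Yn N Zs - (s + kap) * (Yn N z / Yn N Zs)) with ((Vn N z - (s + kap) * Yn N z) / Yn N Zs)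
    by (field; lra).
  replace (Vn N z / Yn N Zs - (s - kap) * (Yn N z / Yn N Zs)) with ((Vn N z - (s - kap) * Yn N z) / Yn N Zs)
    by (field; lra).
  assert (0 < / Yn N Zs) by (apply Rinv_0_lt_compat; auto). unfold Rdiv.
  split; [|split; nra].
  apply (Rmult_le_reg_r (Yn N Zs)); auto. rewrite Rmult_assoc, Rinv_l, Rmult_1_r by lra.
  assert (w * Yn N Zs <= w * (Yn N z * exp ((s + s / 2) * (Zs - z)))) by (apply Rmult_le_compat_l; lra).
  nra.
Qed.

(** The candidate solution: the limit of the rescaled normalized solutions. *)
Let Py x := p1 x + sg * p2 x.
Let Pv x := q1 x + sg * q2 x.

Lemma limit_solution_band kap : 0 < kap -> kap <= s / 2 -> exists Zk, forall z, z <= Zk ->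
  exp (- (s + s / 2) * (Zs - z)) <= Py z /\ Rabs (Pv z - s * Py z) <= kap * Py z.
Proof.
  intros Hkap Hkk. destruct (potential_close kap Hkap) as [Zk0 HZk0].
  exists (Rmin Zk0 Zs). intros z Hz.
  pose proof (Rmin_l Zk0 Zs). pose proof (Rmin_r Zk0 Zs).
  assert (HZk : forall t, t <= Rmin Zk0 Zs -> Rabs (k t - s ^ 2) <= s * kap) by (intros t Ht; apply HZk0; lra).
  destruct (nat_ge (- z)) as [N1 HN1].
  assert (Hseq : forall n, (N1 <= n)%nat ->
      exp (- (s + s / 2) * (Zs - z)) <= p1 z + slope (N0 + n) * p2 z /\
      (q1 z + slope (N0 + n) * q2 z) - (s + kap) * (p1 z + slope (N0 + n) * p2 z) <= 0 /\
      0 <= (q1 z + slope (N0 + n) * q2 z) - (s - kap) * (p1 z + slope (N0 + n) * p2 z))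
    by (intros n Hn; apply (rescaled_band kap (Rmin Zk0 Zs) (N0 + n) z Hkap Hkk); auto;
        [lia| pose proof (le_INR _ _ Hn); rewrite plus_INR; pose proof (pos_INR N0); lra]).
  assert (Hlim : forall f g : R -> R, Un_cv (fun n => f z + slope (N0 + n) * g z) (f z + sg * g z)).
  { intros f g. apply CV_plus; [apply cv_const| apply CV_mult; [exact Hsg| apply cv_const]]. }
  assert (Hlim' : forall r, Un_cv (fun n => (q1 z + slope (N0 + n) * q2 z) - r * (p1 z + slope (N0 + n) * p2 z))
                                (Pv z - r * Py z)).
  { intros r. apply CV_minus; [apply Hlim| apply CV_mult; [apply cv_const| apply Hlim]]. }
  split.
  - apply (lim_ge _ _ _ N1 (Hlim p1 p2)). intros n Hn. apply Hseq; auto.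
  - assert (Pv z - (s + kap) * Py z <= 0) by (apply (lim_le _ _ _ N1 (Hlim' (s + kap))); apply Hseq).
    assert (0 <= Pv z - (s - kap) * Py z) by (apply (lim_ge _ _ _ N1 (Hlim' (s - kap))); apply Hseq).
    apply Rabs_le_between. lra.
Qed.

Lemma limit_solution_slope :
  solves k Py Pv /\ (exists M, forall z, z < M -> Py z <> 0) /\
  (forall eps, eps > 0 -> exists M, forall z, z < M -> Rabs (Pv z / Py z - s) < eps).
Proof.
  split; [apply solves_add_scaled; auto|]. split.
  - destruct (limit_solution_band (s / 2) ltac:(lra) (Rle_refl _)) as [Zk HZ]. exists Zk. intros z Hz.
    destruct (HZ z ltac:(lra)) as [H1 _]. pose proof (exp_pos (- (s + s / 2) * (Zs - z))). lra.
  - intros eps Heps. set (kap := Rmin (eps / 2) (s / 2)).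
    assert (Hkap : 0 < kap) by (unfold kap; apply Rmin_glb_lt; lra).
    destruct (limit_solution_band kap Hkap (Rmin_r _ _)) as [Zk HZ]. exists Zk. intros z Hz.
    destruct (HZ z ltac:(lra)) as [H1 H2]. pose proof (exp_pos (- (s + s / 2) * (Zs - z))).
    assert (HP : 0 < Py z) by lra.
    replace (Pv z / Py z - s) with ((Pv z - s * Py z) / Py z) by (field; lra).
    unfold Rdiv. rewrite Rabs_mult, Rabs_inv, (Rabs_right (Py z)) by lra.
    apply (Rmult_lt_reg_r (Py z)); auto. rewrite Rmult_assoc, Rinv_l, Rmult_1_r by lra.
    assert (kap <= eps / 2) by apply Rmin_l. nra.
Qed.
End LimitSolution.
End MinusInfinity.

Lemma unstable_solution_minf k s : (forall t, continuity_pt k t) -> 0 < s ->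
  (forall eps, eps > 0 -> exists M, forall t, t < M -> Rabs (k t - s ^ 2) < eps) ->
  exists y v, solves k y v /\ (exists M, forall z, z < M -> y z <> 0) /\
    (forall eps, eps > 0 -> exists M, forall z, z < M -> Rabs (v z / y z - s) < eps).
Proof.
  intros Hc Hs Hk. destruct (fundamental_system k Hc) as [y1 [v1 [y2 [v2 [S1 [S2 HW]]]]]].
  destruct (potential_close k s Hs Hk (s / 2) ltac:(lra)) as [Zs HZs].
  destruct (slope_limit k y1 v1 y2 v2 s Zs S1 S2 HW Hs HZs) as [sg [N0 [HN0 Hsg]]].
  destruct (solves_with_data k y1 v1 y2 v2 S1 S2 HW Zs 1 0) as [p1 [q1 [SP1 [P1a P1b]]]].
  destruct (solves_with_data k y1 v1 y2 v2 S1 S2 HW Zs 0 1) as [p2 [q2 [SP2 [P2a P2b]]]].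
  eexists; eexists.
  exact (limit_solution_slope k y1 v1 y2 v2 s Zs S1 S2 HW Hs Hk HZs p1 q1 p2 q2 sg N0
           SP1 SP2 P1a P1b P2a P2b HN0 Hsg).
Qed.

(** * Exponential decay of the travelling wave at [+oo] *)

Lemma lyapunov_inequality c d e r k x y dd : 0 < c -> 0 < d -> 0 < e ->
  e * d <= c / 2 -> e * c <= 1 / 2 -> 0 < r -> r <= c / 2 -> r * (1 + e) <= e / 4 ->
  0 < k -> k <= e / 6 -> k * d * 9 <= 4 * c ->
  Rabs x <= r -> d * dd = - c * y - x * (1 - x) ->
  (2 * d * y * dd + 2 * x * y + e * d * (y ^ 2 + x * dd)) + k * (d * y ^ 2 + x ^ 2 + e * d * x * y) <= 0 /\
  x ^ 2 / 2 <= d * y ^ 2 + x ^ 2 + e * d * x * y.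
Proof.
  intros Hc Hd He Hed Hec Hr Hrc Hre Hk Hke Hkd Hx Hdd.
  assert (HX : 0 <= x ^ 2) by apply pow2_ge_0. assert (HY : 0 <= y ^ 2) by apply pow2_ge_0.
  replace (2 * d * y * dd + 2 * x * y + e * d * (y ^ 2 + x * dd))
    with (-2 * c * y ^ 2 + 2 * (x ^ 2 * y) + e * d * y ^ 2 - e * c * (x * y) - e * x ^ 2 + e * (x ^ 2 * x)).
  2:{ replace (2 * d * y * dd) with (2 * y * (d * dd)) by ring.
      replace (e * d * (y ^ 2 + x * dd)) with (e * d * y ^ 2 + e * x * (d * dd)) by ring.
      rewrite Hdd. ring. }
  assert (f1 : - (e * c * (x * y)) <= e / 2 * x ^ 2 + e * c * c / 2 * y ^ 2).
  { assert (0 <= e * (x + c * y) ^ 2) by (apply Rmult_le_pos; [lra| apply pow2_ge_0]). nra. }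
  assert (Hxr : Rabs x * (x ^ 2 + y ^ 2) <= r * (x ^ 2 + y ^ 2)) by (apply Rmult_le_compat_r; lra).
  assert (f2 : 2 * (x ^ 2 * y) <= r * x ^ 2 + r * y ^ 2).
  { assert (2 * (x * y) <= x ^ 2 + y ^ 2) by (assert (0 <= (x - y) ^ 2) by apply pow2_ge_0; nra).
    assert (- (2 * (x * y)) <= x ^ 2 + y ^ 2) by (assert (0 <= (x + y) ^ 2) by apply pow2_ge_0; nra).
    destruct (Rle_or_lt 0 x); [rewrite Rabs_right in Hxr by lra| rewrite Rabs_left in Hxr by lra]; nra. }
  assert (f3 : e * (x ^ 2 * x) <= e * r * x ^ 2).
  { assert (x ^ 2 * x <= x ^ 2 * r) by (apply Rmult_le_compat_l; [auto| pose proof (Rle_abs x); lra]). nra. }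
  assert (He2 : e * e * d <= 1 / 4) by nra.
  assert (f4a : e * d * (x * y) <= x ^ 2 / 2 + d * y ^ 2 / 8).
  { assert (0 <= (x - e * d * y) ^ 2) by apply pow2_ge_0.
    assert (e * e * d * d * y ^ 2 <= d / 4 * y ^ 2) by (apply Rmult_le_compat_r; [auto| nra]). nra. }
  assert (f4b : - (e * d * (x * y)) <= x ^ 2 / 2 + d * y ^ 2 / 8).
  { assert (0 <= (x + e * d * y) ^ 2) by apply pow2_ge_0.
    assert (e * e * d * d * y ^ 2 <= d / 4 * y ^ 2) by (apply Rmult_le_compat_r; [auto| nra]). nra. }
  assert (f4 : k * (e * d * (x * y)) <= k * (x ^ 2 / 2 + d * y ^ 2 / 8)) by (apply Rmult_le_compat_l; lra).
  assert (h1 : e * d * y ^ 2 <= c / 2 * y ^ 2) by (apply Rmult_le_compat_r; lra).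
  assert (h2 : e * c * c / 2 * y ^ 2 <= c / 4 * y ^ 2).
  { replace (e * c * c / 2) with ((e * c) * (c / 2)) by field. apply Rmult_le_compat_r; [auto| nra]. }
  assert (h3 : k * d * 9 * y ^ 2 <= 4 * c * y ^ 2) by (apply Rmult_le_compat_r; lra).
  assert (h4 : r * y ^ 2 <= c / 2 * y ^ 2) by (apply Rmult_le_compat_r; lra).
  assert (h5 : r * (1 + e) * x ^ 2 <= e / 4 * x ^ 2) by (apply Rmult_le_compat_r; lra).
  assert (h6 : k * x ^ 2 <= e / 6 * x ^ 2) by (apply Rmult_le_compat_r; lra).
  split.
  - replace (k * (d * y ^ 2 + x ^ 2 + e * d * x * y)) with (k * d * y ^ 2 + k * x ^ 2 + k * (e * d * (x * y))) by ring.
    nra.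
  - replace (e * d * x * y) with (e * d * (x * y)) by ring. nra.
Qed.

Lemma lyapunov_constants delta c : 0 < delta -> 0 < c ->
  exists e r k, 0 < e /\ e * delta <= c / 2 /\ e * c <= 1 / 2 /\ 0 < r /\ r <= c / 2 /\
    r * (1 + e) <= e / 4 /\ 0 < k /\ k <= e / 6 /\ k * delta * 9 <= 4 * c.
Proof.
  intros Hd Hc.
  set (e := Rmin (c / (2 * delta)) (1 / (2 * c))).
  set (r := Rmin (c / 2) (e / (4 + 4 * e))).
  set (k := Rmin (e / 6) (4 * c / (9 * delta))).
  assert (He : 0 < e) by (apply Rmin_glb_lt; apply Rdiv_lt_0_compat; lra).
  exists e, r, k. repeat split; auto.
  - apply (Rle_trans _ (c / (2 * delta) * delta)); [apply Rmult_le_compat_r; [lra| apply Rmin_l]|].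
    right. field. lra.
  - apply (Rle_trans _ (1 / (2 * c) * c)); [apply Rmult_le_compat_r; [lra| apply Rmin_r]|].
    right. field. lra.
  - apply Rmin_glb_lt; [lra| apply Rdiv_lt_0_compat; lra].
  - apply Rmin_l.
  - apply (Rle_trans _ (e / (4 + 4 * e) * (1 + e))); [apply Rmult_le_compat_r; [lra| apply Rmin_r]|].
    right. field. lra.
  - apply Rmin_glb_lt; apply Rdiv_lt_0_compat; lra.
  - apply Rmin_l.
  - replace (k * delta * 9) with (k * (9 * delta)) by ring.
    apply (Rle_trans _ (4 * c / (9 * delta) * (9 * delta))); [apply Rmult_le_compat_r; [lra| apply Rmin_r]|].
    right. field. lra.
Qed.

Lemma derivable_pt_lim_lyapunov (u du ddu : R -> R) d e t :
  derivable_pt_lim u t (du t) -> derivable_pt_lim du t (ddu t) ->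
  derivable_pt_lim (fun t => d * du t ^ 2 + u t ^ 2 + e * d * u t * du t) t
    (2 * d * du t * ddu t + 2 * u t * du t + e * d * (du t ^ 2 + u t * ddu t)).
Proof.
  intros Du Ddu.
  apply (derivable_pt_lim_eq _ _ (d * (2 * du t * ddu t) + 2 * u t * du t
                                  + (e * d) * (du t * du t + u t * ddu t))); [|ring].
  apply derivable_pt_lim_plus; [apply derivable_pt_lim_plus|].
  - apply derivable_pt_lim_scal, derivable_pt_lim_square; auto.
  - apply derivable_pt_lim_square; auto.
  - apply (derivable_pt_lim_ext (fun t => (e * d) * (u t * du t))); [intros; ring|].
    apply derivable_pt_lim_scal, derivable_pt_lim_mult; auto.
Qed.

Lemma abs_le_of_weighted_square x D k z : x ^ 2 * exp (k * z) <= D ->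
  Rabs x <= (D + 1) / 2 * exp (- (k / 2) * z).
Proof.
  intros Hx. set (w := exp (k / 2 * z)).
  assert (Hw : 0 < w) by apply exp_pos.
  assert (Hw2 : w * w = exp (k * z)) by (unfold w; rewrite <- exp_plus; f_equal; field).
  assert (2 * Rabs x * w <= x ^ 2 * (w * w) + 1).
  { assert (0 <= (Rabs x * w - 1) ^ 2) by apply pow2_ge_0. rewrite <- (pow2_abs x). nra. }
  replace (exp (- (k / 2) * z)) with (/ w) by (unfold w; rewrite <- exp_Ropp; f_equal; ring).
  apply (Rmult_le_reg_r w); auto. rewrite Rmult_assoc, Rinv_l by lra. nra.
Qed.

(** A solution of [delta u'' + c u' + u (1 - u) = 0] tending to [0] at
    [+oo] decays exponentially there: once [|u| <= r], the Lyapunov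
    function [V] satisfies [V' <= - k V] and [V >= u^2 / 2]. *)
Lemma wave_exp_decay (delta c : R) (u du ddu : R -> R) : 0 < delta -> 0 < c ->
  (forall z, derivable_pt_lim u z (du z)) -> (forall z, derivable_pt_lim du z (ddu z)) ->
  (forall z, delta * ddu z + c * du z + u z * (1 - u z) = 0) -> lim_pinf u 0 ->
  exists A kap Z, 0 < kap /\ 0 <= A /\ 0 <= Z /\ forall z, Z <= z -> Rabs (u z) <= A * exp (- kap * z).
Proof.
  intros Hd Hc Du Ddu Hode Hlim.
  destruct (lyapunov_constants delta c Hd Hc)
    as [e [r [k [He [Hed [Hec [Hr [Hrc [Hre [Hk [Hke Hkd]]]]]]]]]]].
  destruct (Hlim r Hr) as [M HM].
  set (V := fun t => delta * du t ^ 2 + u t ^ 2 + e * delta * u t * du t).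
  set (Z := Rmax (M + 1) 0).
  assert (HZM : M < Z) by (unfold Z; pose proof (Rmax_l (M + 1) 0); lra).
  assert (HZ0 : 0 <= Z) by (unfold Z; apply Rmax_r).
  assert (Hpt : forall t, Z <= t ->
    (2 * delta * du t * ddu t + 2 * u t * du t + e * delta * (du t ^ 2 + u t * ddu t)) + k * V t <= 0
    /\ u t ^ 2 / 2 <= V t).
  { intros t Ht. specialize (HM t ltac:(lra)). rewrite Rminus_0_r in HM.
    assert (Hdd : delta * ddu t = - c * du t - u t * (1 - u t)) by (pose proof (Hode t); lra).
    exact (lyapunov_inequality c delta e r k (u t) (du t) (ddu t)
             Hc Hd He Hed Hec Hr Hrc Hre Hk Hke Hkd ltac:(lra) Hdd). }
  assert (HF : forall z, Z <= z -> V z * exp (k * z) <= V Z * exp (k * Z)).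
  { intros z Hz. apply (nonincreasing_of_deriv (fun t => V t * exp (k * t))
      (fun t => ((2 * delta * du t * ddu t + 2 * u t * du t + e * delta * (du t ^ 2 + u t * ddu t))
                 + k * V t) * exp (k * t))); auto.
    - intros t _. apply derivable_pt_lim_mul_exp, derivable_pt_lim_lyapunov; auto.
    - intros t Ht. destruct (Hpt t ltac:(lra)) as [H1 _]. pose proof (exp_pos (k * t)). nra. }
  set (D := 2 * (V Z * exp (k * Z))).
  assert (HD : 0 <= D).
  { unfold D. destruct (Hpt Z (Rle_refl _)) as [_ H2].
    pose proof (pow2_ge_0 (u Z)). pose proof (exp_pos (k * Z)). nra. }
  exists ((D + 1) / 2), (k / 2), Z. split; [lra|]. split; [lra|]. split; [auto|].
  intros z Hz. apply abs_le_of_weighted_square.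
  specialize (HF z Hz). destruct (Hpt z Hz) as [_ H2]. pose proof (exp_pos (k * z)).
  assert (u z ^ 2 / 2 * exp (k * z) <= V z * exp (k * z)) by (apply Rmult_le_compat_r; lra).
  unfold D. lra.
Qed.

(** * Reduction of the eigenvalue problem to [y'' = k y] *)

(** The substitution [y = p e^(a z)], [v = (q + a p) e^(a z)] turns the
    system [p' = q, q' = (k - a^2) p - 2 a q] into [y' = v, v' = k y], and
    conversely. *)
Definition conjugate_system (k : R -> R) (a : R) (p q : R -> R) : Prop :=
  (forall z, derivable_pt_lim p z (q z)) /\
  (forall z, derivable_pt_lim q z ((k z - a ^ 2) * p z - 2 * a * q z)).

Lemma solves_of_conjugate k a p q : conjugate_system k a p q ->
  solves k (fun z => p z * exp (a * z)) (fun z => (q z + a * p z) * exp (a * z)).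
Proof.
  intros [Dp Dq]. split; intros z.
  - apply derivable_pt_lim_mul_exp, Dp.
  - apply (derivable_pt_lim_eq _ _ (((((k z - a ^ 2) * p z - 2 * a * q z) + a * q z)
                                    + a * (q z + a * p z)) * exp (a * z))); [|ring].
    apply (derivable_pt_lim_mul_exp (fun z => q z + a * p z)).
    apply derivable_pt_lim_plus; [apply Dq| apply derivable_pt_lim_scal, Dp].
Qed.

Lemma conjugate_of_solves k a y v : solves k y v ->
  conjugate_system k a (fun z => y z * exp (- a * z)) (fun z => (v z - a * y z) * exp (- a * z)).
Proof.
  intros [Sy Sv]. split; intros z.
  - apply (derivable_pt_lim_eq _ _ ((v z + - a * y z) * exp (- a * z))); [|ring].
    apply derivable_pt_lim_mul_exp, Sy.
  - apply (derivable_pt_lim_eq _ _ ((k z * y z - a * v z + - a * (v z - a * y z)) * exp (- a * z))); [|ring].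
    apply (derivable_pt_lim_mul_exp (fun t => v t - a * y t)).
    apply derivable_pt_lim_minus; [apply Sv| apply derivable_pt_lim_scal, Sy].
Qed.

Lemma conjugate_ratio_pinf k a A kap Z p q : (forall t, continuity_pt k t) ->
  0 < kap -> 0 <= A -> 0 <= Z -> (forall z, Z <= z -> Rabs (k z) <= A * exp (- kap * z)) ->
  conjugate_system k a p q -> (exists z0, ~ (p z0 = 0 /\ q z0 = 0)) ->
  ratio_tends_pinf p q (- a).
Proof.
  intros Hc Hkap HA HZ Hkb Hpq [z0 Hz0].
  destruct (fundamental_system k Hc) as [y1 [v1 [y2 [v2 [S1 [S2 HW]]]]]].
  pose proof (exp_pos (a * z0)) as He0.
  destruct (log_derivative_pinf k A kap Z Hkap HA HZ Hkb y1 v1 y2 v2 _ _ S1 S2 HW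
              (solves_of_conjugate k a p q Hpq)) as [[M HM] Hr].
  { exists z0. intros [H1 H2]. apply Hz0.
    apply Rmult_integral in H1. destruct H1 as [H1|H1]; [|lra].
    rewrite H1, Rmult_0_r, Rplus_0_r in H2. apply Rmult_integral in H2. split; [auto| lra]. }
  assert (Hp : forall z, z > M -> p z <> 0) by (intros z Hz Hp0; apply (HM z Hz); rewrite Hp0; ring).
  split; [exists M; exact Hp|].
  intros eps Heps. destruct (Hr eps Heps) as [M' HM']. exists (Rmax M M'). intros z Hz.
  pose proof (Rmax_l M M'). pose proof (Rmax_r M M'). pose proof (exp_pos (a * z)).
  specialize (HM' z ltac:(lra)). specialize (Hp z ltac:(lra)).
  replace (q z / p z - - a) with ((q z + a * p z) * exp (a * z) / (p z * exp (a * z)) - 0); [exact HM'|].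
  field. split; lra.
Qed.

Lemma conjugate_ratio_minf k a s : (forall t, continuity_pt k t) -> 0 < s ->
  (forall eps, eps > 0 -> exists M, forall t, t < M -> Rabs (k t - s ^ 2) < eps) ->
  exists p q, conjugate_system k a p q /\ ratio_tends_minf p q (s - a).
Proof.
  intros Hc Hs Hk. destruct (unstable_solution_minf k s Hc Hs Hk) as [y [v [S [[M HM] Hr]]]].
  exists (fun z => y z * exp (- a * z)), (fun z => (v z - a * y z) * exp (- a * z)).
  split; [apply conjugate_of_solves, S|]. split.
  - exists M. intros z Hz. pose proof (exp_pos (- a * z)). specialize (HM z Hz).
    intros Hx. apply Rmult_integral in Hx. destruct Hx; lra.
  - intros eps Heps. destruct (Hr eps Heps) as [M' HM']. exists (Rmin M M'). intros z Hz.
    pose proof (Rmin_l M M'). pose proof (Rmin_r M M'). pose proof (exp_pos (- a * z)).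
    specialize (HM z ltac:(lra)). specialize (HM' z ltac:(lra)).
    replace ((v z - a * y z) * exp (- a * z) / (y z * exp (- a * z)) - (s - a)) with (v z / y z - s);
      [exact HM'| field; split; lra].
Qed.

(** * The critical eigenvalue *)

(** Potential [k = 2 u / delta] of the reduced equation and its limit rate
    [s = sqrt (2 / delta)] at [-oo]. *)
Definition wave_potential (delta : R) (u : R -> R) (z : R) : R := 2 * u z / delta.
Definition minus_rate (delta : R) : R := sqrt (8 * delta) / (2 * delta).

Lemma minus_rate_spec delta : 0 < delta -> 0 < minus_rate delta /\ minus_rate delta ^ 2 = 2 / delta.
Proof.
  intros Hd. unfold minus_rate. split.
  - apply Rdiv_lt_0_compat; [apply sqrt_lt_R0| ]; lra.
  - unfold Rdiv. rewrite Rpow_mult_distr, <- Rsqr_pow2, Rsqr_sqrt by lra. field. lra.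
Qed.

Lemma critical_parameters delta c : 0 < delta -> 0 < c -> c <= 2 * sqrt delta ->
  let lt := 1 - c ^ 2 / (4 * delta) in
  0 <= lt /\ mu_s_plus delta c lt = - c / (2 * delta) /\ mu_u_plus delta c lt = - c / (2 * delta) /\
  mu_u_minus delta c lt = minus_rate delta - c / (2 * delta) /\ (c < 2 * sqrt delta -> 0 < lt).
Proof.
  intros Hd Hc Hc1 lt.
  pose proof (sqrt_sqrt delta ltac:(lra)). pose proof (sqrt_pos delta).
  assert (Hcd : forall b, c ^ 2 <= b * delta -> c ^ 2 / (4 * delta) <= b / 4).
  { intros b Hb. apply (Rmult_le_reg_r (4 * delta)); [lra|]. unfold Rdiv.
    rewrite Rmult_assoc, Rinv_l by lra. nra. }
  assert (Hzero : c ^ 2 + 4 * delta * (lt - 1) = 0) by (unfold lt; field; lra).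
  repeat split.
  - assert (c ^ 2 / (4 * delta) <= 4 / 4) by (apply Hcd; nra). unfold lt. lra.
  - unfold mu_s_plus. rewrite Hzero, sqrt_0. field. lra.
  - unfold mu_u_plus. rewrite Hzero, sqrt_0. field. lra.
  - unfold mu_u_minus, minus_rate.
    replace (c ^ 2 + 4 * delta * (lt + 1)) with (8 * delta) by (unfold lt; field; lra). field. lra.
  - intros Hlt. assert (c ^ 2 < 4 * delta) by nra.
    assert (c ^ 2 / (4 * delta) < 1).
    { apply (Rmult_lt_reg_r (4 * delta)); [lra|]. unfold Rdiv. rewrite Rmult_assoc, Rinv_l by lra. lra. }
    unfold lt. lra.
Qed.

Lemma wave_potential_properties delta c u : 0 < delta -> 0 < c -> travelling_wave delta c u ->
  (forall t, continuity_pt (wave_potential delta u) t) /\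
  (forall eps, eps > 0 -> exists M, forall t, t < M ->
     Rabs (wave_potential delta u t - minus_rate delta ^ 2) < eps) /\
  (exists A kap Z, 0 < kap /\ 0 <= A /\ 0 <= Z /\
     forall z, Z <= z -> Rabs (wave_potential delta u z) <= A * exp (- kap * z)).
Proof.
  intros Hd Hc [du [ddu [Du [Ddu [Hode [Hm Hp]]]]]].
  destruct (minus_rate_spec delta Hd) as [_ Hs2].
  assert (Hk : forall z, Rabs (wave_potential delta u z - minus_rate delta ^ 2) = 2 / delta * Rabs (u z - 1)
                 /\ Rabs (wave_potential delta u z) = 2 / delta * Rabs (u z)).
  { intros z. unfold wave_potential. rewrite Hs2.
    replace (2 * u z / delta - 2 / delta) with (2 / delta * (u z - 1)) by (field; lra).
    replace (2 * u z / delta) with (2 / delta * u z) by (field; lra).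
    rewrite !Rabs_mult, Rabs_right by (left; apply Rdiv_lt_0_compat; lra). auto. }
  assert (H2d : 0 < 2 / delta) by (apply Rdiv_lt_0_compat; lra).
  split; [|split].
  - intros t. unfold wave_potential. apply continuity_pt_div; [| apply continuity_pt_const; intros ? ?; reflexivity| lra].
    apply continuity_pt_scal. eapply continuity_of_derivable, Du.
  - intros eps Heps. destruct (Hm (eps * delta / 2)) as [M HM]; [apply Rdiv_lt_0_compat; nra|].
    exists M. intros t Ht. specialize (HM t Ht). rewrite (proj1 (Hk t)).
    replace eps with (2 / delta * (eps * delta / 2)) by (field; lra).
    apply Rmult_lt_compat_l; auto.
  - destruct (wave_exp_decay delta c u du ddu Hd Hc Du Ddu Hode Hp) as [A [kap [Z [Hkap [HA [HZ Hdec]]]]]].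
    exists (2 / delta * A), kap, Z. split; [auto|]. split; [nra|]. split; [auto|].
    intros z Hz. rewrite (proj2 (Hk z)), Rmult_assoc. apply Rmult_le_compat_l; [lra| auto].
Qed.

Lemma lin_solution_conjugate delta c u p q : 0 < delta ->
  lin_solution delta c (1 - c ^ 2 / (4 * delta)) u p q <->
  conjugate_system (wave_potential delta u) (c / (2 * delta)) p q /\ exists z0, ~ (p z0 = 0 /\ q z0 = 0).
Proof.
  intros Hd.
  assert (Hcoef : forall z, (1 - c ^ 2 / (4 * delta) - 1 + 2 * u z) / delta * p z - c / delta * q z
      = (wave_potential delta u z - (c / (2 * delta)) ^ 2) * p z - 2 * (c / (2 * delta)) * q z).
  { intros z. unfold wave_potential. field. lra. }
  split.
  - intros [Dp [Dq Hnt]]. split; [split|]; auto. intros z. rewrite <- Hcoef. apply Dq.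
  - intros [[Dp Dq] Hnt]. split; [auto| split; [|auto]]. intros z. rewrite Hcoef. apply Dq.
Qed.

Theorem mainTheorem6 (delta c : R) (u : R -> R)
  (Hdelta : 0 < delta) (Hc0 : 0 < c) (Hc1 : c <= 2 * sqrt delta)
  (Hu : travelling_wave delta c u) :
  let lt := 1 - c ^ 2 / (4 * delta) in
  0 <= lt /\
  mu_s_plus delta c lt = - c / (2 * delta) /\
  mu_u_plus delta c lt = - c / (2 * delta) /\
  (* the unstable Riccati solution exists ... *)
  (exists p q, lin_solution delta c lt u p q /\
     ratio_tends_minf p q (mu_u_minus delta c lt)) /\
  (* ... and every Riccati solution tending to mu^u_- at -oo tends to the
     double root mu^s_+ = -c/(2 delta) at +oo *)
  (forall p q, lin_solution delta c lt u p q ->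
     ratio_tends_minf p q (mu_u_minus delta c lt) ->
     ratio_tends_pinf p q (mu_s_plus delta c lt)) /\
  extended_eigenvalue delta c u lt /\
  (c < 2 * sqrt delta -> 0 < lt).
Proof.
  intros lt.
  destruct (critical_parameters delta c Hdelta Hc0 Hc1) as [Hlt0 [Hms [Hmu [Hmuu Hpos]]]].
  fold lt in Hlt0, Hms, Hmu, Hmuu, Hpos.
  destruct (wave_potential_properties delta c u Hdelta Hc0 Hu)
    as [Hkc [Hkm [A [kap [Z [Hkap [HA [HZ Hkdec]]]]]]]].
  destruct (minus_rate_spec delta Hdelta) as [Hs _].
  destruct (conjugate_ratio_minf _ (c / (2 * delta)) _ Hkc Hs Hkm) as [p0 [q0 [Hconj [[M HM] Hminf]]]].
  assert (Hlin0 : lin_solution delta c lt u p0 q0).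
  { apply (lin_solution_conjugate delta c u p0 q0 Hdelta). split; [auto|].
    exists (M - 1). intros [H0 _]. apply (HM (M - 1)); [lra| auto]. }
  assert (Hminf0 : ratio_tends_minf p0 q0 (mu_u_minus delta c lt))
    by (rewrite Hmuu; split; [exists M|]; auto).
  assert (Hevery : forall p q, lin_solution delta c lt u p q -> ratio_tends_pinf p q (mu_s_plus delta c lt)).
  { intros p q Hpq. apply (lin_solution_conjugate delta c u p q Hdelta) in Hpq as [Hconj' Hnt].
    rewrite Hms. replace (- c / (2 * delta)) with (- (c / (2 * delta))) by (field; lra).
    apply (conjugate_ratio_pinf (wave_potential delta u) _ A kap Z); auto. }
  split; [exact Hlt0|]. split; [exact Hms|]. split; [exact Hmu|].
  split; [exists p0, q0; auto|]. split; [intros p q Hpq _; apply Hevery, Hpq|].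
  split; [exists p0, q0; auto| exact Hpos].
Qed.
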